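(* Let $\Omega\subset\mathbb{R}^3$ be open, let $x\in\Omega$ and $0<r<\operatorname{dist}(x,\partial\Omega)$. Let $u\in C^2(\Omega)^3$ satisfy $\nabla\cdot u=0$ in $\Omega$, let $v\in\mathbb{R}^3$ be a constant vector, and let $p$ be a (classical) solution of $$-\Delta p=\nabla\cdot(u\cdot\nabla u)=\sum_{i,j=1}^3\partial_i\partial_j(u_iu_j)\quad\text{in }\Omega.$$ Then $$\partial_r\Big\{\overline{p}(x,r)+\fint_{|\xi|=1}\big|\xi\cdot(u(x+r\xi)-v)\big|^2\,dS(\xi)\Big\}=-\frac1r\fint_{|\xi|=1}\Big[3\big|\xi\cdot(u(x+r\xi)-v)\big|^2-\big|u(x+r\xi)-v\big|^2\Big]dS(\xi).$$
   Context: For a function $f$, $\overline{f}(x,r)=\frac{1}{4\pi r^2}\int_{|x-y|=r}f(y)\,dS(y)=\fint_{|\xi|=1}f(x+r\xi)\,dS(\xi)$ denotes the spherical average, where $\fint$ denotes the normalized integral (integral divided by the area of the unit sphere $\mathbb{S}^2$). *)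

From Stdlib Require Import Reals.
From Coquelicot Require Import Coquelicot.
Open Scope R_scope.

Definition R3 : Type := (R * R * R)%type.

Inductive idx := I1 | I2 | I3.

Definition coord (x : R3) (i : idx) : R :=
  match i with
  | I1 => fst (fst x)
  | I2 => snd (fst x)
  | I3 => snd x
  end.

Definition sum3 (f : idx -> R) : R := f I1 + f I2 + f I3.

Definition mk3 (a b c : R) : R3 := (a, b, c).
Definition vadd (x y : R3) : R3 :=
  mk3 (coord x I1 + coord y I1) (coord x I2 + coord y I2) (coord x I3 + coord y I3).
Definition vsub (x y : R3) : R3 :=
  mk3 (coord x I1 - coord y I1) (coord x I2 - coord y I2) (coord x I3 - coord y I3).
Definition vscale (a : R) (x : R3) : R3 :=
  mk3 (a * coord x I1) (a * coord x I2) (a * coord x I3).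
Definition dot (x y : R3) : R := sum3 (fun i => coord x i * coord y i).
Definition nsq (x : R3) : R := dot x x.
Definition enorm (x : R3) : R := sqrt (nsq x).
Definition edist (x y : R3) : R := enorm (vsub x y).

Definition evec (i : idx) : R3 :=
  match i with
  | I1 => mk3 1 0 0
  | I2 => mk3 0 1 0
  | I3 => mk3 0 0 1
  end.

Definition partial (i : idx) (f : R3 -> R) (y : R3) : R :=
  Derive (fun t => f (vadd y (vscale t (evec i)))) 0.

Definition C2_on (Om : R3 -> Prop) (f : R3 -> R) : Prop :=
  forall y, Om y ->
    continuous f y /\
    (forall i, ex_derive (fun t => f (vadd y (vscale t (evec i)))) 0
               /\ continuous (partial i f) y) /\
    (forall i j, ex_derive (fun t => partial j f (vadd y (vscale t (evec i)))) 0
               /\ continuous (partial i (partial j f)) y).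

Definition interior (Om : R3 -> Prop) (y : R3) : Prop :=
  exists eps, 0 < eps /\ forall z, edist z y < eps -> Om z.
Definition closure (Om : R3 -> Prop) (y : R3) : Prop :=
  forall eps, 0 < eps -> exists z, Om z /\ edist z y < eps.
Definition boundary (Om : R3 -> Prop) (y : R3) : Prop :=
  closure Om y /\ ~ interior Om y.

Definition sph (th ph : R) : R3 := mk3 (sin th * cos ph) (sin th * sin ph) (cos th).

(* normalized surface integral over the unit sphere S^2:
   (1/(4π)) ∫_{S^2} g dS, with dS = sin θ dφ dθ *)
Definition sph_avg (g : R3 -> R) : R :=
  / (4 * PI) *
  RInt (fun th => RInt (fun ph => g (sph th ph) * sin th) 0 (2 * PI)) 0 PI.

Definition sbar (f : R3 -> R) (x : R3) (r : R) : R :=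
  sph_avg (fun xi => f (vadd x (vscale r xi))).

From Stdlib Require Import Reals.
From Coquelicot Require Import Coquelicot.
From Stdlib Require Import Lra Psatz Nsatz Classical ClassicalEpsilon.
Open Scope R_scope.

(** Write [w = u - v] and [xi] for a point of the unit sphere.  Differentiating under the
    integral, the derivative at [r] is the mean of [xi.grad p + 2 (xi.w) (xi.(Du) xi)]; it is
    evaluated with the tangential divergence theorem on spheres,
    [s * mean (div V - xi.(DV) xi) = 2 * mean (xi.V)], proved in spherical coordinates.
    - [U = grad p + (u.grad) u] is divergence free by the Poisson equation and [div u = 0], so
      [s^2] times the mean flux of [U] through the sphere of radius [s] is constant; it vanishes
      at [s = 0], hence the mean of [xi.grad p] is minus that of [xi.(u.grad) u].
    - With [z = y - x], the field [W = (z.w) w + (z.u) v - (z.v) u] has divergence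
      [|w|^2 + z.(u.grad) u] and normal component [r (xi.w)^2] on the sphere; the theorem
      applied to [W] turns the remaining terms into [(|w|^2 - 3 (xi.w)^2) / r]. *)

Lemma mk3_coord (z : R3) : mk3 (coord z I1) (coord z I2) (coord z I3) = z.
Proof. destruct z as [[a b] c]; reflexivity. Qed.

Definition near3 (y z : R3) (e : R) : Prop := forall i, Rabs (coord z i - coord y i) < e.

Lemma near3_ball (y z : R3) (e : R) : near3 y z e -> ball y e z.
Proof.
  destruct y as [[a b] c]; destruct z as [[a' b'] c']; intro h.
  split; [split|]; [apply (h I1) | apply (h I2) | apply (h I3)].
Qed.

Lemma open_near3 (Om : R3 -> Prop) y : open Om -> Om y ->
  exists e, 0 < e /\ forall z, near3 y z e -> Om z.
Proof.
  intros HO Hy. destruct (HO y Hy) as [e He].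
  exists e; split; [apply cond_pos|]. intros z hz. apply He, near3_ball, hz.
Qed.

Lemma continuous_near3 (g : R3 -> R) y : continuous g y ->
  forall eps, 0 < eps -> exists d, 0 < d /\ forall z, near3 y z d -> Rabs (g z - g y) < eps.
Proof.
  intros H eps Heps. destruct (H _ (locally_ball (g y) (mkposreal eps Heps))) as [d Hd].
  exists d; split; [apply cond_pos|]. intros z hz. apply (Hd z (near3_ball _ _ _ hz)).
Qed.

Lemma Rabs_diag (a : R) : Rabs (a - a) = 0.
Proof. rewrite Rminus_diag; apply Rabs_R0. Qed.

Lemma near3_refl y e : 0 < e -> near3 y y e.
Proof. intros he i; rewrite Rabs_diag; exact he. Qed.

(** * Partial derivatives and the chain rule *)

Definition setc (z : R3) (i : idx) (t : R) : R3 :=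
  match i with
  | I1 => mk3 t (coord z I2) (coord z I3)
  | I2 => mk3 (coord z I1) t (coord z I3)
  | I3 => mk3 (coord z I1) (coord z I2) t
  end.

Lemma coord_setc z i t j :
  coord (setc z i t) j = match i, j with I1, I1 | I2, I2 | I3, I3 => t | _, _ => coord z j end.
Proof. destruct i, j; reflexivity. Qed.

Lemma setc_coord z i : setc z i (coord z i) = z.
Proof. destruct i; apply mk3_coord. Qed.

Lemma setc_line z i a t : vadd (setc z i a) (vscale t (evec i)) = setc z i (a + t).
Proof. destruct i; unfold vadd, vscale, setc, mk3; simpl; f_equal; try f_equal; ring. Qed.

Lemma near3_setc y w i c e : near3 y w e -> Rabs (c - coord y i) < e -> near3 y (setc w i c) e.
Proof. intros Hw Hc j; rewrite coord_setc; destruct i, j; auto. Qed.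

Definition partials_exist (Om : R3 -> Prop) (f : R3 -> R) : Prop :=
  forall z, Om z -> forall i, ex_derive (fun t => f (vadd z (vscale t (evec i)))) 0.

Lemma is_derive_setc Om f z i a : partials_exist Om f -> Om (setc z i a) ->
  is_derive (fun t => f (setc z i t)) a (partial i f (setc z i a)).
Proof.
  intros HP Ha. unfold partial.
  assert (Hshift : is_derive (fun t => f (vadd (setc z i a) (vscale (t - a) (evec i)))) a
     (Derive (fun t => f (vadd (setc z i a) (vscale t (evec i)))) 0)).
  { rewrite <- (scal_one (Derive _ 0)).
    apply (is_derive_comp (fun t => f (vadd (setc z i a) (vscale t (evec i)))) (fun t => t - a)).
    - rewrite Rminus_diag. exact (Derive_correct _ _ (HP _ Ha i)).
    - auto_derive; auto; ring. }
  eapply is_derive_ext; [|exact Hshift]. intro t; simpl.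
  rewrite setc_line; do 2 f_equal; ring.
Qed.

Lemma between_Rabs a b c : Rmin a b <= c <= Rmax a b -> Rabs (c - a) <= Rabs (b - a).
Proof.
  unfold Rmin, Rmax, Rabs; destruct (Rle_dec a b); intros [h1 h2]; repeat destruct Rcase_abs; lra.
Qed.

Lemma mvt_setc Om f z i b : partials_exist Om f ->
  (forall c, Rmin (coord z i) b <= c <= Rmax (coord z i) b -> Om (setc z i c)) ->
  exists c, Rmin (coord z i) b <= c <= Rmax (coord z i) b /\
   f (setc z i b) - f z = partial i f (setc z i c) * (b - coord z i).
Proof.
  intros HP Hin. replace (f z) with (f (setc z i (coord z i))) by (rewrite setc_coord; reflexivity).
  apply (MVT_gen (fun t => f (setc z i t)) _ b (fun c => partial i f (setc z i c))).
  - intros c hc. apply is_derive_setc with Om; auto. apply Hin; lra.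
  - intros c hc. apply continuity_pt_filterlim, (ex_derive_continuous (fun t => f (setc z i t))).
    eexists. apply is_derive_setc with Om; auto.
Qed.

(* Walking from y to z one coordinate at a time, each step is a one-variable mean value theorem. *)
Lemma mvt_near3 Om f y z e : partials_exist Om f -> (forall w, near3 y w e -> Om w) ->
  near3 y z e -> exists c1 c2 c3, near3 y c1 e /\ near3 y c2 e /\ near3 y c3 e /\
   f z - f y = partial I1 f c1 * (coord z I1 - coord y I1) +
               partial I2 f c2 * (coord z I2 - coord y I2) +
               partial I3 f c3 * (coord z I3 - coord y I3).
Proof.
  intros HP Hin Hz.
  assert (He : 0 < e) by (specialize (Hz I1); pose proof (Rabs_pos (coord z I1 - coord y I1)); lra).
  assert (Hstep : forall w i, near3 y w e -> coord w i = coord y i ->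
    exists c, near3 y (setc w i c) e /\
      f (setc w i (coord z i)) - f w = partial i f (setc w i c) * (coord z i - coord y i)).
  { intros w i Hw Hwi.
    assert (Hc : forall c, Rmin (coord w i) (coord z i) <= c <= Rmax (coord w i) (coord z i) ->
      near3 y (setc w i c) e).
    { intros c hc. apply near3_setc; auto. rewrite Hwi in hc.
      eapply Rle_lt_trans; [apply between_Rabs, hc | apply Hz]. }
    destruct (mvt_setc Om f w i (coord z i) HP (fun c hc => Hin _ (Hc c hc))) as [c [hc E]].
    exists c; split; [apply Hc, hc|]. rewrite E, Hwi; reflexivity. }
  set (p1 := setc y I1 (coord z I1)). set (p2 := setc p1 I2 (coord z I2)).
  assert (N1 : near3 y p1 e) by (apply near3_setc; [apply near3_refl | apply Hz]; auto).
  assert (N2 : near3 y p2 e) by (apply near3_setc; [exact N1 | apply Hz]).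
  destruct (Hstep y I1 (near3_refl y e He) eq_refl) as [c1 [h1 E1]].
  destruct (Hstep p1 I2 N1 eq_refl) as [c2 [h2 E2]].
  destruct (Hstep p2 I3 N2 eq_refl) as [c3 [h3 E3]].
  exists (setc y I1 c1), (setc p1 I2 c2), (setc p2 I3 c3); do 3 (split; [assumption|]).
  change (setc p2 I3 (coord z I3)) with (mk3 (coord z I1) (coord z I2) (coord z I3)) in E3.
  rewrite mk3_coord in E3.
  fold p1 in E1; fold p2 in E2. lra.
Qed.

Lemma Rabs_mult_lt_le d e a : Rabs d < e -> Rabs (d * a) <= e * Rabs a.
Proof. intro h. rewrite Rabs_mult. apply Rmult_le_compat_r; [apply Rabs_pos | lra]. Qed.

Lemma first_order_expansion Om f y : open Om -> partials_exist Om f -> Om y ->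
  (forall i, continuous (partial i f) y) ->
  forall eps, 0 < eps -> exists d, 0 < d /\ forall z, near3 y z d ->
   Rabs (f z - f y - sum3 (fun i => partial i f y * (coord z i - coord y i)))
    <= eps * sum3 (fun i => Rabs (coord z i - coord y i)).
Proof.
  intros HO HP Hy Hc eps Heps.
  destruct (open_near3 Om y HO Hy) as [e0 [He0 Hin]].
  destruct (continuous_near3 _ _ (Hc I1) eps Heps) as [d1 [Hd1 C1]].
  destruct (continuous_near3 _ _ (Hc I2) eps Heps) as [d2 [Hd2 C2]].
  destruct (continuous_near3 _ _ (Hc I3) eps Heps) as [d3 [Hd3 C3]].
  set (d := Rmin e0 (Rmin d1 (Rmin d2 d3))).
  assert (Hd : forall d' z, d <= d' -> near3 y z d -> near3 y z d').
  { intros d' z hd hz j. eapply Rlt_le_trans; [apply hz | exact hd]. }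
  assert (hd0 : d <= e0) by apply Rmin_l.
  assert (hd1 : d <= d1) by (eapply Rle_trans; [apply Rmin_r | apply Rmin_l]).
  assert (hd2 : d <= d2) by (do 2 (eapply Rle_trans; [apply Rmin_r|]); apply Rmin_l).
  assert (hd3 : d <= d3) by (do 2 (eapply Rle_trans; [apply Rmin_r|]); apply Rmin_r).
  exists d; split; [unfold d; repeat apply Rmin_pos; auto|].
  intros z hz.
  destruct (mvt_near3 Om f y z d HP (fun w hw => Hin w (Hd e0 w hd0 hw)) hz)
    as [c1 [c2 [c3 [h1 [h2 [h3 E]]]]]].
  pose proof (Rabs_mult_lt_le _ _ (coord z I1 - coord y I1) (C1 c1 (Hd d1 c1 hd1 h1))).
  pose proof (Rabs_mult_lt_le _ _ (coord z I2 - coord y I2) (C2 c2 (Hd d2 c2 hd2 h2))).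
  pose proof (Rabs_mult_lt_le _ _ (coord z I3 - coord y I3) (C3 c3 (Hd d3 c3 hd3 h3))).
  unfold sum3; rewrite E.
  match goal with |- Rabs ?a <= _ => replace a with
    ((partial I1 f c1 - partial I1 f y) * (coord z I1 - coord y I1) +
     (partial I2 f c2 - partial I2 f y) * (coord z I2 - coord y I2) +
     (partial I3 f c3 - partial I3 f y) * (coord z I3 - coord y I3)) by ring end.
  eapply Rle_trans; [apply Rabs_triang|].
  eapply Rle_trans; [apply Rplus_le_compat_r, Rabs_triang|]. lra.
Qed.


Lemma is_derive_Rconst (c x : R) : is_derive (fun _ => c) x 0.
Proof. apply (is_derive_const (K := R_AbsRing) (V := R_NormedModule)). Qed.
Lemma is_derive_Rplus (f g : R -> R) x df dg :
  is_derive f x df -> is_derive g x dg -> is_derive (fun t => f t + g t) x (df + dg).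
Proof. intros; apply (is_derive_plus f g); auto. Qed.
Lemma is_derive_Rmult (f g : R -> R) x df dg :
  is_derive f x df -> is_derive g x dg -> is_derive (fun t => f t * g t) x (df * g x + f x * dg).
Proof. intros; apply (is_derive_mult f g); auto. intros; apply Rmult_comm. Qed.
Lemma is_derive_Ropp (f : R -> R) x df :
  is_derive f x df -> is_derive (fun t => - f t) x (- df).
Proof. intros; apply (is_derive_opp f); auto. Qed.
Lemma is_derive_sum3 (f : idx -> R -> R) df t : (forall i, is_derive (f i) t (df i)) ->
  is_derive (fun u => sum3 (fun i => f i u)) t (sum3 df).
Proof. intro H. unfold sum3. repeat apply is_derive_Rplus; apply H. Qed.

Lemma is_derive_increment_bound (g : R -> R) t dg : is_derive g t dg ->
  exists d, 0 < d /\ forall h, Rabs h < d -> Rabs (g (t + h) - g t) <= (Rabs dg + 1) * Rabs h.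
Proof.
  intro H. destruct (proj1 (is_derive_Reals _ _ _) H 1 Rlt_0_1) as [d Hd].
  exists d; split; [apply cond_pos|]. intros h hh.
  destruct (Req_dec h 0) as [->|h0].
  { rewrite Rplus_0_r, Rminus_diag, !Rabs_R0; lra. }
  specialize (Hd h h0 hh).
  replace (g (t + h) - g t) with (((g (t + h) - g t) / h - dg + dg) * h) by (field; auto).
  rewrite Rabs_mult. apply Rmult_le_compat_r; [apply Rabs_pos|].
  eapply Rle_trans; [apply Rabs_triang | lra].
Qed.

Lemma is_derive_zero_of_small_increment (E : R -> R) t :
  (forall eps, 0 < eps -> exists d, 0 < d /\
     forall h, Rabs h < d -> Rabs (E (t + h) - E t) <= eps * Rabs h) ->
  is_derive E t 0.
Proof.
  intro H. apply is_derive_Reals. intros eps Heps.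
  destruct (H (eps / 2)) as [d [Hd Hinc]]; [lra|].
  exists (mkposreal d Hd). intros h h0 hh. rewrite Rminus_0_r.
  unfold Rdiv at 1. rewrite Rabs_mult, Rabs_inv.
  apply Rle_lt_trans with (eps / 2); [|lra].
  apply Rmult_le_reg_r with (Rabs h); [apply Rabs_pos_lt; auto|].
  rewrite Rmult_assoc, Rinv_l, Rmult_1_r by (apply Rabs_no_R0; auto). apply Hinc, hh.
Qed.

Lemma increment_sum3_bound (g : R -> R3) (dg : idx -> R) t :
  (forall i, is_derive (fun s => coord (g s) i) t (dg i)) ->
  exists d L, 0 < d /\ 0 < L /\ forall h, Rabs h < d ->
    sum3 (fun i => Rabs (coord (g (t + h)) i - coord (g t) i)) <= L * Rabs h.
Proof.
  intro Hd.
  destruct (is_derive_increment_bound _ _ _ (Hd I1)) as [d1 [Hd1 B1]].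
  destruct (is_derive_increment_bound _ _ _ (Hd I2)) as [d2 [Hd2 B2]].
  destruct (is_derive_increment_bound _ _ _ (Hd I3)) as [d3 [Hd3 B3]].
  exists (Rmin d1 (Rmin d2 d3)), (sum3 (fun i => Rabs (dg i) + 1)).
  split; [repeat apply Rmin_pos; auto|]. split.
  { unfold sum3. pose proof (Rabs_pos (dg I1)). pose proof (Rabs_pos (dg I2)).
    pose proof (Rabs_pos (dg I3)). lra. }
  intros h hh. pose proof (Rmin_l d1 (Rmin d2 d3)). pose proof (Rmin_r d1 (Rmin d2 d3)).
  pose proof (Rmin_l d2 d3). pose proof (Rmin_r d2 d3).
  specialize (B1 h ltac:(lra)). specialize (B2 h ltac:(lra)). specialize (B3 h ltac:(lra)).
  unfold sum3. nra.
Qed.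

Lemma is_derive_first_order_remainder Om f (g : R -> R3) (dg : idx -> R) t :
  open Om -> partials_exist Om f -> Om (g t) -> (forall i, continuous (partial i f) (g t)) ->
  (forall i, is_derive (fun s => coord (g s) i) t (dg i)) ->
  is_derive (fun s => f (g s) - f (g t) - sum3 (fun i => partial i f (g t) * (coord (g s) i - coord (g t) i))) t 0.
Proof.
  intros HO HP Hy Hc Hd.
  destruct (increment_sum3_bound g dg t Hd) as [d1 [L [Hd1 [HL Hinc]]]].
  apply is_derive_zero_of_small_increment. intros eps Heps.
  destruct (first_order_expansion Om f (g t) HO HP Hy Hc (eps / L)) as [df [Hdf Fr]];
    [apply Rdiv_lt_0_compat; auto|].
  exists (Rmin d1 (df / L)). split; [apply Rmin_pos; auto; apply Rdiv_lt_0_compat; auto|].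
  intros h hh. pose proof (Rmin_l d1 (df / L)). pose proof (Rmin_r d1 (df / L)).
  specialize (Hinc h ltac:(lra)).
  assert (Hnear : near3 (g t) (g (t + h)) df).
  { assert (hLh : L * Rabs h < df).
    { apply Rmult_lt_reg_l with (/ L); [apply Rinv_0_lt_compat; auto|].
      rewrite <- Rmult_assoc, Rinv_l, Rmult_1_l by lra. rewrite Rmult_comm. lra. }
    intro i. apply Rle_lt_trans with (L * Rabs h); [|exact hLh].
    eapply Rle_trans; [|exact Hinc]. unfold sum3.
    pose proof (Rabs_pos (coord (g (t + h)) I1 - coord (g t) I1)).
    pose proof (Rabs_pos (coord (g (t + h)) I2 - coord (g t) I2)).
    pose proof (Rabs_pos (coord (g (t + h)) I3 - coord (g t) I3)). destruct i; lra. }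
  unfold sum3 at 2. rewrite !Rminus_diag, !Rmult_0_r, !Rplus_0_r, !Rminus_0_r.
  eapply Rle_trans; [apply Fr, Hnear|].
  replace (eps * Rabs h) with (eps / L * (L * Rabs h)) by (field; lra).
  apply Rmult_le_compat_l; [apply Rlt_le, Rdiv_lt_0_compat; auto | exact Hinc].
Qed.

Lemma is_derive_comp_partials Om f (g : R -> R3) (dg : idx -> R) t :
  open Om -> partials_exist Om f -> Om (g t) -> (forall i, continuous (partial i f) (g t)) ->
  (forall i, is_derive (fun s => coord (g s) i) t (dg i)) ->
  is_derive (fun s => f (g s)) t (sum3 (fun i => partial i f (g t) * dg i)).
Proof.
  intros HO HP Hy Hc Hd. set (y := g t).
  set (lin := fun s => sum3 (fun i => partial i f y * (coord (g s) i - coord y i))).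
  apply (is_derive_ext (fun s => (f y + lin s) + (f (g s) - f y - lin s)));
    [intro s; simpl; ring|].
  rewrite <- (Rplus_0_r (sum3 _)). apply is_derive_Rplus.
  - rewrite <- (Rplus_0_l (sum3 _)). apply is_derive_Rplus; [apply is_derive_Rconst|].
    apply (is_derive_sum3 (fun i s => partial i f y * (coord (g s) i - coord y i))). intro i.
    apply (is_derive_scal (fun s => coord (g s) i - coord y i)).
    rewrite <- (Rminus_0_r (dg i)). apply (is_derive_minus (fun s => coord (g s) i)); auto.
    apply is_derive_Rconst.
  - exact (is_derive_first_order_remainder Om f g dg t HO HP Hy Hc Hd).
Qed.

Section ContinuityR.
Context {U : UniformSpace}.

Lemma continuous_Rplus (f g : U -> R) x :
  continuous f x -> continuous g x -> continuous (fun y => f y + g y) x.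
Proof. intros; apply (continuous_plus (V := R_NormedModule)); auto. Qed.
Lemma continuous_Rmult (f g : U -> R) x :
  continuous f x -> continuous g x -> continuous (fun y => f y * g y) x.
Proof. intros; apply (continuous_mult (K := R_AbsRing)); auto. Qed.
Lemma continuous_Ropp (f : U -> R) x : continuous f x -> continuous (fun y => - f y) x.
Proof. intros; apply (continuous_opp (V := R_NormedModule)); auto. Qed.
Lemma continuous_Rminus (f g : U -> R) x :
  continuous f x -> continuous g x -> continuous (fun y => f y - g y) x.
Proof. intros; apply continuous_Rplus; auto; apply continuous_Ropp; auto. Qed.
Lemma continuous_Rconst (c : R) (x : U) : continuous (fun _ => c) x.
Proof. apply continuous_const. Qed.
Lemma continuous_sin_comp (f : U -> R) x : continuous f x -> continuous (fun y => sin (f y)) x.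
Proof. intros; apply (continuous_comp f sin); auto; apply continuous_sin. Qed.
Lemma continuous_cos_comp (f : U -> R) x : continuous f x -> continuous (fun y => cos (f y)) x.
Proof. intros; apply (continuous_comp f cos); auto; apply continuous_cos. Qed.

Lemma continuous_mk3 (f1 f2 f3 : U -> R) x :
  continuous f1 x -> continuous f2 x -> continuous f3 x ->
  continuous (fun y => mk3 (f1 y) (f2 y) (f3 y)) x.
Proof.
  intros H1 H2 H3 P [e He].
  assert (L1 := H1 _ (locally_ball (f1 x) e)).
  assert (L2 := H2 _ (locally_ball (f2 x) e)).
  assert (L3 := H3 _ (locally_ball (f3 x) e)).
  unfold filtermap in *.
  generalize (filter_and _ _ (filter_and _ _ L1 L2) L3). apply filter_imp. intros y [[h1 h2] h3]. apply He. split; [split|]; assumption.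
Qed.

Lemma continuous_coord (q : R3) i : continuous (fun z : R3 => coord z i) q.
Proof.
  intros P [e He]. exists e. intros z hz. apply He.
  destruct q as [[a b] c]; destruct z as [[a' b'] c']; destruct hz as [[h1 h2] h3].
  destruct i; assumption.
Qed.

Lemma continuous_coord_comp (b : U -> R3) y i :
  continuous b y -> continuous (fun y => coord (b y) i) y.
Proof. intro H. apply (continuous_comp b (fun z => coord z i)); auto. apply continuous_coord. Qed.

Lemma continuous_sph (a b : U -> R) y : continuous a y -> continuous b y ->
  continuous (fun y => sph (a y) (b y)) y.
Proof.
  intros Ha Hb. apply continuous_mk3.
  - apply continuous_Rmult; [apply continuous_sin_comp|apply continuous_cos_comp]; auto.
  - apply continuous_Rmult; apply continuous_sin_comp; auto.
  - apply continuous_cos_comp; auto.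
Qed.

Lemma continuous_ray (x : R3) (a : U -> R) (b : U -> R3) y :
  continuous a y -> continuous b y -> continuous (fun y => vadd x (vscale (a y) (b y))) y.
Proof.
  intros Ha Hb. apply continuous_mk3; apply continuous_Rplus;
    try apply continuous_Rconst; apply continuous_Rmult; auto; apply continuous_coord_comp; auto.
Qed.

End ContinuityR.

Ltac solve_continuous leaf := cbv beta; repeat match goal with
 | |- continuous (fun _ => _ + _) _ => apply continuous_Rplus
 | |- continuous (fun _ => _ - _) _ => apply continuous_Rminus
 | |- continuous (fun _ => _ * _) _ => apply continuous_Rmult
 | |- continuous (fun _ => - _) _ => apply continuous_Ropp
 | |- continuous (fun _ => sin _) _ => apply continuous_sin_comp
 | |- continuous (fun _ => cos _) _ => apply continuous_cos_comp
 | |- continuous (fun q => coord q _) _ => apply continuous_coord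
 | |- continuous (fun q => coord (sph _ _) _) _ =>
     apply continuous_coord_comp, continuous_sph; apply continuous_coord
 | |- _ => leaf
 | |- continuous (fun _ => _) _ => apply continuous_Rconst
 end.

Definition C1_on (Om : R3 -> Prop) (f : R3 -> R) (Df : idx -> R3 -> R) : Prop :=
  (forall z, Om z -> forall j, is_derive (fun t => f (vadd z (vscale t (evec j)))) 0 (Df j z)) /\
  (forall z, Om z -> forall j, continuous (Df j) z) /\
  (forall z, Om z -> continuous f z).

Lemma vadd_vscale0 (x xi : R3) : vadd x (vscale 0 xi) = x.
Proof. destruct x as [[a1 a2] a3]. unfold vadd, vscale, mk3; simpl. f_equal; [f_equal|]; ring. Qed.

Section C1Functions.
Variable Om : R3 -> Prop.

Lemma C1_on_plus f g Df Dg : C1_on Om f Df -> C1_on Om g Dg ->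
  C1_on Om (fun y => f y + g y) (fun j y => Df j y + Dg j y).
Proof.
  intros [F1 [F2 F3]] [G1 [G2 G3]]. split; [|split].
  - intros z hz j. apply (is_derive_Rplus (fun t => f (vadd z (vscale t (evec j))))
      (fun t => g (vadd z (vscale t (evec j))))); auto.
  - intros z hz j. apply continuous_Rplus; auto.
  - intros z hz. apply continuous_Rplus; auto.
Qed.

Lemma C1_on_mult f g Df Dg : C1_on Om f Df -> C1_on Om g Dg ->
  C1_on Om (fun y => f y * g y) (fun j y => Df j y * g y + f y * Dg j y).
Proof.
  intros [F1 [F2 F3]] [G1 [G2 G3]]. split; [|split].
  - intros z hz j. generalize (is_derive_Rmult (fun t => f (vadd z (vscale t (evec j))))
      (fun t => g (vadd z (vscale t (evec j)))) 0 _ _ (F1 z hz j) (G1 z hz j)).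
    simpl. rewrite vadd_vscale0. exact (fun h => h).
  - intros z hz j. apply continuous_Rplus; apply continuous_Rmult; auto.
  - intros z hz. apply continuous_Rmult; auto.
Qed.

Lemma C1_on_const c : C1_on Om (fun _ => c) (fun _ _ => 0).
Proof.
  split; [|split]; intros.
  - apply is_derive_Rconst.
  - apply continuous_Rconst.
  - apply continuous_Rconst.
Qed.

Lemma C1_on_opp f Df : C1_on Om f Df -> C1_on Om (fun y => - f y) (fun j y => - Df j y).
Proof.
  intros [F1 [F2 F3]]. split; [|split].
  - intros z hz j. apply (is_derive_Ropp (fun t => f (vadd z (vscale t (evec j))))); auto.
  - intros z hz j. apply continuous_Ropp; auto.
  - intros z hz. apply continuous_Ropp; auto.
Qed.

Lemma C1_on_minus f g Df Dg : C1_on Om f Df -> C1_on Om g Dg ->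
  C1_on Om (fun y => f y - g y) (fun j y => Df j y - Dg j y).
Proof. intros H1 H2. apply (C1_on_plus f (fun y => - g y)); auto. apply C1_on_opp; auto. Qed.

Lemma C1_on_ext f Df Df' : C1_on Om f Df -> (forall j z, Df j z = Df' j z) -> C1_on Om f Df'.
Proof.
  intros [F1 [F2 F3]] E. split; [|split]; auto.
  - intros z hz j. rewrite <- E. auto.
  - intros z hz j. apply (continuous_ext (Df j)); auto.
Qed.

Lemma C1_on_sum3 (f : idx -> R3 -> R) Df : (forall i, C1_on Om (f i) (Df i)) ->
  C1_on Om (fun y => sum3 (fun i => f i y)) (fun j y => sum3 (fun i => Df i j y)).
Proof. intros H. unfold sum3. repeat apply C1_on_plus; apply H. Qed.

Definition kron (j k : idx) : R := match j, k with I1, I1 | I2, I2 | I3, I3 => 1 | _, _ => 0 end.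

Lemma C1_on_coord k : C1_on Om (fun y => coord y k) (fun j _ => kron j k).
Proof.
  split; [|split]; intros.
  - destruct j, k; simpl; auto_derive; auto; ring.
  - apply continuous_Rconst.
  - apply continuous_coord.
Qed.

Lemma partial_C1_on f Df z j : C1_on Om f Df -> Om z -> partial j f z = Df j z.
Proof. intros [F1 _] hz. unfold partial. apply is_derive_unique, F1, hz. Qed.

Lemma C2_on_C1_on f : C2_on Om f ->
  C1_on Om f (fun j => partial j f) /\ forall i, C1_on Om (partial i f) (fun j => partial j (partial i f)).
Proof.
  intro H. split; [|intro i]; (split; [|split]); intros z hz; try intro j; specialize (H z hz).
  - apply Derive_correct, (proj1 (proj1 (proj2 H) j)).
  - apply (proj2 (proj1 (proj2 H) j)).
  - apply (proj1 H).
  - apply Derive_correct, (proj1 (proj2 (proj2 H) j i)).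
  - apply (proj2 (proj2 (proj2 H) j i)).
  - apply (proj2 (proj1 (proj2 H) i)).
Qed.

Lemma is_derive_comp_C1_on f Df (g : R -> R3) (dg : idx -> R) t :
  open Om -> C1_on Om f Df -> Om (g t) ->
  (forall i, is_derive (fun s => coord (g s) i) t (dg i)) ->
  is_derive (fun s => f (g s)) t (sum3 (fun i => Df i (g t) * dg i)).
Proof.
  intros HO HC Hy Hd.
  replace (sum3 (fun i => Df i (g t) * dg i)) with (sum3 (fun i => partial i f (g t) * dg i))
    by (unfold sum3; rewrite !(partial_C1_on f Df (g t)); auto).
  apply is_derive_comp_partials with Om; auto.
  - intros z hz j. eexists. apply (proj1 HC), hz.
  - intro i. apply continuous_ext_loc with (Df i); [|apply (proj1 (proj2 HC)), Hy].
    generalize (HO _ Hy). apply filter_imp. intros y hy. symmetry. apply partial_C1_on; auto.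
Qed.

End C1Functions.

Lemma coord_axis_line y t i j : coord (vadd y (vscale t (evec i))) j - coord y j = t * kron i j.
Proof. destruct y as [[a b] c]; destruct i, j; simpl; ring. Qed.

Lemma locally_axis_line Om y i : open Om -> Om y ->
  locally 0 (fun t => Om (vadd y (vscale t (evec i)))).
Proof.
  intros HO Hy. destruct (open_near3 Om y HO Hy) as [e [He Hin]].
  exists (mkposreal e He). intros t ht. apply Hin. intro j.
  change (Rabs (t + - 0) < e) in ht. rewrite Ropp_0, Rplus_0_r in ht.
  rewrite coord_axis_line, Rabs_mult. destruct i, j; simpl; rewrite ?Rabs_R1, ?Rabs_R0; lra.
Qed.

Lemma partial_ext_on Om f g y i : open Om -> Om y -> (forall z, Om z -> f z = g z) ->
  partial i f y = partial i g y.
Proof.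
  intros HO Hy E. apply Derive_ext_loc.
  generalize (locally_axis_line Om y i HO Hy). apply filter_imp. intros t ht. apply E, ht.
Qed.

Lemma C1_on_deriv_eq0 Om f Df y i : open Om -> Om y -> C1_on Om f Df ->
  (forall z, Om z -> f z = 0) -> Df i y = 0.
Proof.
  intros HO Hy HC Z. rewrite <- (is_derive_unique _ _ _ (proj1 HC y Hy i)).
  apply is_derive_unique, (is_derive_ext_loc (fun _ => 0)); [|apply is_derive_Rconst].
  generalize (locally_axis_line Om y i HO Hy). apply filter_imp. intros t ht. symmetry. apply Z, ht.
Qed.

(** * Integrals depending on parameters *)

Lemma locally_Rabs_lt (s s0 eta : R) : Rabs (s - s0) < eta -> locally s (fun u => Rabs (u - s0) < eta).
Proof.
  intro h. assert (He : 0 < eta - Rabs (s - s0)) by lra.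
  exists (mkposreal _ He). intros u hu. change (Rabs (u - s) < eta - Rabs (s - s0)) in hu.
  replace (u - s0) with ((u - s) + (s - s0)) by ring.
  eapply Rle_lt_trans; [apply Rabs_triang | lra].
Qed.

Lemma continuous_uniform_segment (k : R -> R -> R -> R) a b s0 t0 e :
  0 < e -> (forall u, a <= u <= b ->
     continuous (fun q : R3 => k (coord q I1) (coord q I2) (coord q I3)) (mk3 s0 t0 u)) ->
  exists d : posreal, forall s t u, Rabs (s - s0) < d -> Rabs (t - t0) < d -> a <= u <= b ->
     Rabs (k s t u - k s0 t0 u) <= 2 * e.
Proof.
  intros He Hc.
  assert (D : forall u, {d : posreal | a <= u <= b -> forall z, near3 (mk3 s0 t0 u) z d ->
      Rabs (k (coord z I1) (coord z I2) (coord z I3) - k s0 t0 u) < e}).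
  { intro u. apply constructive_indefinite_description.
    destruct (classic (a <= u <= b)) as [hu|hu].
    - destruct (continuous_near3 _ _ (Hc u hu) e He) as [d [Hd Hd2]].
      exists (mkposreal d Hd). intros _ z hz. exact (Hd2 z hz).
    - exists (mkposreal 1 Rlt_0_1). intro; contradiction. }
  destruct (compactness_value_1d a b (fun u => proj1_sig (D u))) as [d Hd].
  exists d. intros s t u hs ht hu. apply Rnot_lt_le. intro Hlt.
  apply (Hd u hu). intros [w [hw [huw hdw]]].
  assert (Hw := proj2_sig (D w) hw). set (dw := proj1_sig (D w)) in *.
  assert (N1 : near3 (mk3 s0 t0 w) (mk3 s t u) dw) by (intros [| |]; simpl; lra).
  assert (N2 : near3 (mk3 s0 t0 w) (mk3 s0 t0 u) dw)
    by (intros [| |]; simpl; rewrite ?Rabs_diag; try apply cond_pos; lra).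
  specialize (Hw _ N1) as P1; specialize (Hw _ N2) as P2; simpl in P1, P2.
  pose proof (Rabs_triang (k s t u - k s0 t0 w) (- (k s0 t0 u - k s0 t0 w))) as T.
  rewrite Rabs_Ropp in T.
  replace (k s t u - k s0 t0 w + - (k s0 t0 u - k s0 t0 w)) with (k s t u - k s0 t0 u) in T by ring.
  lra.
Qed.

Lemma continuity_2d_pt_RInt (k : R -> R -> R -> R) a b s0 t0 eta :
  a <= b -> 0 < eta ->
  (forall s t u, Rabs (s - s0) < eta -> Rabs (t - t0) < eta -> a <= u <= b ->
     continuous (fun q : R3 => k (coord q I1) (coord q I2) (coord q I3)) (mk3 s t u)) ->
  continuity_2d_pt (fun s t => RInt (k s t) a b) s0 t0.
Proof.
  intros Hab Heta Hc eps.
  set (e := eps / (2 * (b - a + 1))).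
  assert (He : 0 < e) by (apply Rdiv_lt_0_compat; [apply cond_pos | lra]).
  assert (Hex : forall s t, Rabs (s - s0) < eta -> Rabs (t - t0) < eta -> ex_RInt (k s t) a b).
  { intros s t hs ht. apply (ex_RInt_continuous (V := R_CompleteNormedModule)). intros u hu.
    rewrite Rmin_left, Rmax_right in hu by lra.
    apply (continuous_comp (fun u => mk3 s t u) (fun q : R3 => k (coord q I1) (coord q I2) (coord q I3))).
    - apply continuous_mk3; [apply continuous_const|apply continuous_const|apply continuous_id].
    - apply Hc; auto. }
  destruct (continuous_uniform_segment k a b s0 t0 e He) as [d Hd].
  { intros u hu. apply Hc; rewrite ?Rabs_diag; auto. }
  assert (Hdm : 0 < Rmin d eta) by (apply Rmin_pos; [apply cond_pos|lra]).
  exists (mkposreal _ Hdm). intros s t hs ht. simpl in hs, ht.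
  pose proof (Rmin_l d eta). pose proof (Rmin_r d eta).
  rewrite <- (RInt_minus (V := R_CompleteNormedModule)) by (apply Hex; rewrite ?Rabs_diag; lra).
  eapply Rle_lt_trans; [apply abs_RInt_le_const with (M := 2 * e); [exact Hab| |]|].
  - apply (ex_RInt_minus (V := R_NormedModule)); apply Hex; rewrite ?Rabs_diag; lra.
  - intros u hu. apply Hd; auto; lra.
  - unfold e. apply Rle_lt_trans with (eps * ((b - a) / (b - a + 1))); [right; field; lra|].
    rewrite <- (Rmult_1_r eps) at 2. apply Rmult_lt_compat_l; [apply cond_pos|].
    apply Rmult_lt_reg_r with (b - a + 1); [lra|]. unfold Rdiv. rewrite Rmult_assoc, Rinv_l; lra.
Qed.

Lemma continuity_2d_pt_fix2 (K : R3 -> R) (c s t : R) :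
  continuous K (mk3 s c t) -> continuity_2d_pt (fun u v => K (mk3 u c v)) s t.
Proof.
  intro H. apply continuity_2d_pt_filterlim.
  apply (continuous_comp (fun z : R * R => mk3 (fst z) c (snd z)) K (s, t)); [|exact H].
  apply continuous_mk3; [apply continuous_fst | apply continuous_const | apply continuous_snd].
Qed.

Lemma continuity_2d_pt_fix1 (K : R3 -> R) (c s t : R) :
  continuous K (mk3 c s t) -> continuity_2d_pt (fun u v => K (mk3 c u v)) s t.
Proof.
  intro H. apply continuity_2d_pt_filterlim.
  apply (continuous_comp (fun z : R * R => mk3 c (fst z) (snd z)) K (s, t)); [|exact H].
  apply continuous_mk3; [apply continuous_const | apply continuous_fst | apply continuous_snd].
Qed.

Lemma continuous_fix12 (K : R3 -> R) s t u :
  continuous K (mk3 s t u) -> continuous (fun v => K (mk3 s t v)) u.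
Proof.
  intro H. apply (continuous_comp (fun v => mk3 s t v) K u); [|exact H].
  apply continuous_mk3; [apply continuous_const | apply continuous_const | apply continuous_id].
Qed.

Lemma continuity_2d_pt_snd (f : R -> R -> R) x y :
  continuity_2d_pt f x y -> continuous (fun v => f x v) y.
Proof.
  intro H. apply continuity_2d_pt_filterlim in H.
  apply (continuous_comp (fun v => (x, v)) (fun z : R * R => f (fst z) (snd z)) y); [|exact H].
  intros P [e He]. exists e. intros v hv. apply He. split; [apply ball_center | exact hv].
Qed.

Definition in_sph_coords (G : R -> R3 -> R) (q : R3) : R :=
  G (coord q I1) (sph (coord q I2) (coord q I3)).

Lemma continuous_sph_integrand G q : continuous (in_sph_coords G) q ->
  continuous (fun q : R3 => G (coord q I1) (sph (coord q I2) (coord q I3)) * sin (coord q I2)) q.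
Proof.
  intro H. apply continuous_Rmult; [exact H|].
  apply continuous_sin_comp, continuous_coord.
Qed.

Section DeriveSphAvg.

Variables (G H : R -> R3 -> R) (s0 eta : R).
Hypotheses
  (HD : forall s th ph, Rabs (s - s0) < eta -> is_derive (fun z => G z (sph th ph)) s (H s (sph th ph)))
  (HG : forall s th ph, Rabs (s - s0) < eta -> continuous (in_sph_coords G) (mk3 s th ph))
  (HH : forall s th ph, Rabs (s - s0) < eta -> continuous (in_sph_coords H) (mk3 s th ph)).

Lemma is_derive_inner_RInt th s : Rabs (s - s0) < eta ->
  is_derive (fun z => RInt (fun ph => G z (sph th ph) * sin th) 0 (2 * PI)) s
     (RInt (fun ph => H s (sph th ph) * sin th) 0 (2 * PI)).
Proof.
  intros hs.
  assert (Dv : forall u ph, Rabs (u - s0) < eta ->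
     is_derive (fun z => G z (sph th ph) * sin th) u (H u (sph th ph) * sin th)).
  { intros u ph hu. apply (is_derive_ext (fun z => sin th * G z (sph th ph)));
      [intro; apply Rmult_comm|].
    rewrite (Rmult_comm (H u _)). apply is_derive_scal, HD, hu. }
  rewrite (RInt_ext _ (fun ph => Derive (fun z => G z (sph th ph) * sin th) s))
    by (intros ph _; symmetry; apply is_derive_unique, Dv, hs).
  apply (is_derive_RInt_param (fun z ph => G z (sph th ph) * sin th)).
  - generalize (locally_Rabs_lt _ _ _ hs). apply filter_imp. intros u hu ph _. eexists. apply Dv, hu.
  - intros ph _. apply continuity_2d_pt_ext_loc with (fun u v => H u (sph th v) * sin th).
    + destruct (locally_Rabs_lt _ _ _ hs) as [d Hd]. exists d.
      intros u v hu _. symmetry. apply is_derive_unique, Dv, Hd, hu.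
    + apply (continuity_2d_pt_fix2 (fun q => H (coord q I1) (sph (coord q I2) (coord q I3)) * sin (coord q I2))).
      apply continuous_sph_integrand, HH, hs.
  - generalize (locally_Rabs_lt _ _ _ hs). apply filter_imp. intros u hu.
    apply (ex_RInt_continuous (V := R_CompleteNormedModule)). intros ph _.
    apply (continuous_fix12 (fun q => G (coord q I1) (sph (coord q I2) (coord q I3)) * sin (coord q I2))).
    apply continuous_sph_integrand, HG, hu.
Qed.

End DeriveSphAvg.

Lemma continuity_2d_pt_inner_RInt (G : R -> R3 -> R) s0 eta s th :
  Rabs (s - s0) < eta ->
  (forall s th ph, Rabs (s - s0) < eta -> continuous (in_sph_coords G) (mk3 s th ph)) ->
  continuity_2d_pt (fun u v => RInt (fun ph => G u (sph v ph) * sin v) 0 (2 * PI)) s th.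
Proof.
  intros hs HG. pose proof PI_RGT_0.
  apply (continuity_2d_pt_RInt (fun u v ph => G u (sph v ph) * sin v) 0 (2 * PI) s th (eta - Rabs (s - s0)));
    [lra | lra |].
  intros u v ph hu _ _. apply continuous_sph_integrand, HG.
  replace (u - s0) with ((u - s) + (s - s0)) by ring.
  eapply Rle_lt_trans; [apply Rabs_triang | lra].
Qed.

Lemma is_derive_sph_avg (G H : R -> R3 -> R) s0 eta :
  0 < eta ->
  (forall s th ph, Rabs (s - s0) < eta -> is_derive (fun z => G z (sph th ph)) s (H s (sph th ph))) ->
  (forall s th ph, Rabs (s - s0) < eta -> continuous (in_sph_coords G) (mk3 s th ph)) ->
  (forall s th ph, Rabs (s - s0) < eta -> continuous (in_sph_coords H) (mk3 s th ph)) ->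
  is_derive (fun s => sph_avg (G s)) s0 (sph_avg (H s0)).
Proof.
  intros Heta HD HG HH. unfold sph_avg. apply is_derive_scal.
  assert (hs0 : Rabs (s0 - s0) < eta) by (rewrite Rabs_diag; auto).
  rewrite (RInt_ext _ (fun th => Derive (fun z => RInt (fun ph => G z (sph th ph) * sin th) 0 (2 * PI)) s0))
    by (intros th _; symmetry; apply is_derive_unique, (is_derive_inner_RInt G H s0 eta); auto).
  apply (is_derive_RInt_param (fun z th => RInt (fun ph => G z (sph th ph) * sin th) 0 (2 * PI))).
  - generalize (locally_Rabs_lt _ _ _ hs0). apply filter_imp. intros u hu th _. eexists.
    apply (is_derive_inner_RInt G H s0 eta); auto.
  - intros th _.
    apply continuity_2d_pt_ext_loc with (fun u v => RInt (fun ph => H u (sph v ph) * sin v) 0 (2 * PI)).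
    + exists (mkposreal _ Heta). intros u v hu _. symmetry. apply is_derive_unique.
      apply (is_derive_inner_RInt G H s0 eta); auto.
    + apply continuity_2d_pt_inner_RInt with s0 eta; auto.
  - generalize (locally_Rabs_lt _ _ _ hs0). apply filter_imp. intros u hu.
    apply (ex_RInt_continuous (V := R_CompleteNormedModule)). intros th _.
    apply (continuity_2d_pt_snd (fun u v => RInt (fun ph => G u (sph v ph) * sin v) 0 (2 * PI))).
    apply continuity_2d_pt_inner_RInt with s0 eta; auto.
Qed.

(** * Averages over the unit sphere *)

Definition continuous_on_S2 (g : R3 -> R) : Prop := forall th ph, continuous g (sph th ph).

Lemma continuous_on_S2_plus f g :
  continuous_on_S2 f -> continuous_on_S2 g -> continuous_on_S2 (fun xi => f xi + g xi).
Proof. intros A B th ph. apply continuous_Rplus; auto. Qed.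
Lemma continuous_on_S2_minus f g :
  continuous_on_S2 f -> continuous_on_S2 g -> continuous_on_S2 (fun xi => f xi - g xi).
Proof. intros A B th ph. apply continuous_Rminus; auto. Qed.
Lemma continuous_on_S2_scal c f : continuous_on_S2 f -> continuous_on_S2 (fun xi => c * f xi).
Proof. intros A th ph. apply continuous_Rmult; [apply continuous_Rconst | auto]. Qed.

Lemma ex_RInt_sph_inner g th : continuous_on_S2 g ->
  ex_RInt (fun ph => g (sph th ph) * sin th) 0 (2 * PI).
Proof.
  intro H. apply (ex_RInt_continuous (V := R_CompleteNormedModule)). intros ph _.
  apply continuous_Rmult; [|apply continuous_Rconst].
  apply (continuous_comp (fun ph => sph th ph) g); [|apply H].
  apply continuous_sph; [apply continuous_Rconst | apply continuous_id].
Qed.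

Lemma ex_RInt_sph_outer g : continuous_on_S2 g ->
  ex_RInt (fun th => RInt (fun ph => g (sph th ph) * sin th) 0 (2 * PI)) 0 PI.
Proof.
  intro H. apply (ex_RInt_continuous (V := R_CompleteNormedModule)). intros th _.
  apply (continuity_2d_pt_snd (fun u v => RInt (fun ph => (fun _ => g) u (sph v ph) * sin v) 0 (2 * PI)) 0).
  apply (continuity_2d_pt_inner_RInt (fun _ => g) 0 1); [rewrite Rabs_diag; lra|].
  intros s th' ph _. apply (continuous_comp (fun q : R3 => sph (coord q I2) (coord q I3)) g);
    [apply continuous_sph; apply continuous_coord | apply H].
Qed.

Lemma sph_avg_ext f g : (forall th ph, f (sph th ph) = g (sph th ph)) -> sph_avg f = sph_avg g.
Proof.
  intro H. unfold sph_avg. f_equal. apply RInt_ext. intros th _. apply RInt_ext. intros ph _.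
  rewrite H; auto.
Qed.

Lemma sph_avg_plus f g : continuous_on_S2 f -> continuous_on_S2 g ->
  sph_avg (fun xi => f xi + g xi) = sph_avg f + sph_avg g.
Proof.
  intros Hf Hg. unfold sph_avg. rewrite <- Rmult_plus_distr_l. f_equal.
  rewrite (RInt_ext _ (fun th => RInt (fun ph => f (sph th ph) * sin th) 0 (2 * PI) +
                                 RInt (fun ph => g (sph th ph) * sin th) 0 (2 * PI))).
  - apply (RInt_plus (V := R_CompleteNormedModule)); apply ex_RInt_sph_outer; auto.
  - intros th _. rewrite <- (RInt_plus (V := R_CompleteNormedModule)) by (apply ex_RInt_sph_inner; auto).
    apply RInt_ext. intros. simpl. unfold plus; simpl. ring.
Qed.

Lemma sph_avg_scal c f : continuous_on_S2 f -> sph_avg (fun xi => c * f xi) = c * sph_avg f.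
Proof.
  intros Hf. unfold sph_avg.
  rewrite (RInt_ext _ (fun th => c * RInt (fun ph => f (sph th ph) * sin th) 0 (2 * PI))).
  - rewrite (RInt_scal (V := R_CompleteNormedModule)) by (apply ex_RInt_sph_outer; auto).
    simpl. unfold scal; simpl. unfold mult; simpl. ring.
  - intros th _. rewrite <- (RInt_scal (V := R_CompleteNormedModule)) by (apply ex_RInt_sph_inner; auto).
    apply RInt_ext. intros. simpl. unfold scal; simpl. unfold mult; simpl. ring.
Qed.

Lemma sph_avg_minus f g : continuous_on_S2 f -> continuous_on_S2 g ->
  sph_avg (fun xi => f xi - g xi) = sph_avg f - sph_avg g.
Proof.
  intros Hf Hg. unfold Rminus at 1.
  rewrite (sph_avg_plus f (fun xi => - g xi)); [| auto | intros th ph; apply continuous_Ropp; auto].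
  rewrite (sph_avg_ext (fun xi => - g xi) (fun xi => (-1) * g xi)) by (intros; ring).
  rewrite sph_avg_scal; auto. ring.
Qed.

(** * The tangential divergence theorem on spheres *)

Definition e_th (i : idx) (th ph : R) : R :=
  match i with I1 => cos th * cos ph | I2 => cos th * sin ph | I3 => - sin th end.
Definition e_ph (i : idx) (ph : R) : R := match i with I1 => - sin ph | I2 => cos ph | I3 => 0 end.
Definition de_ph (i : idx) (ph : R) : R := match i with I1 => - cos ph | I2 => - sin ph | I3 => 0 end.
Definition sph_pt (x : R3) (s th ph : R) : R3 := vadd x (vscale s (sph th ph)).

Lemma is_derive_e_th i th ph : is_derive (fun t => e_th i t ph) th (- coord (sph th ph) i).
Proof. destruct i; simpl; auto_derive; auto; ring. Qed.

Lemma is_derive_e_ph i ph : is_derive (fun t => e_ph i t) ph (de_ph i ph).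
Proof. destruct i; simpl; auto_derive; auto; ring. Qed.

Lemma is_derive_sph_pt_th x s th ph j :
  is_derive (fun t => coord (sph_pt x s t ph) j) th (s * e_th j th ph).
Proof. destruct j; unfold sph_pt; simpl; auto_derive; auto; ring. Qed.

Lemma is_derive_sph_pt_ph x s th ph j :
  is_derive (fun t => coord (sph_pt x s th t) j) ph (s * sin th * e_ph j ph).
Proof. destruct j; unfold sph_pt; simpl; auto_derive; auto; ring. Qed.

Section TangentialDivergence.

Variables (Om : R3 -> Prop) (x : R3) (s : R) (V : idx -> R3 -> R) (DV : idx -> idx -> R3 -> R).

(* For a vector field [V] and the sphere of radius [s] about [x], [dflux_th + dflux_ph] is
   [sin th] times the tangential divergence (see [dflux_sum]); each of the two terms is a
   derivative of a function vanishing at the poles or periodic in [ph], so integrates to 0. *)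
Definition flux_th th ph := sin th * sum3 (fun i => e_th i th ph * V i (sph_pt x s th ph)).
Definition flux_ph th ph := sum3 (fun i => e_ph i ph * V i (sph_pt x s th ph)).
Definition dflux_th th ph := cos th * sum3 (fun i => e_th i th ph * V i (sph_pt x s th ph)) +
  sin th * sum3 (fun i => - coord (sph th ph) i * V i (sph_pt x s th ph) +
      e_th i th ph * sum3 (fun j => DV i j (sph_pt x s th ph) * (s * e_th j th ph))).
Definition dflux_ph th ph := sum3 (fun i => de_ph i ph * V i (sph_pt x s th ph) +
      e_ph i ph * sum3 (fun j => DV i j (sph_pt x s th ph) * (s * sin th * e_ph j ph))).

Lemma dflux_sum th ph :
  dflux_th th ph + dflux_ph th ph =
  (s * (sum3 (fun i => DV i i (sph_pt x s th ph)) -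
        sum3 (fun i => sum3 (fun j => coord (sph th ph) i * coord (sph th ph) j * DV i j (sph_pt x s th ph))))
   - 2 * sum3 (fun i => coord (sph th ph) i * V i (sph_pt x s th ph))) * sin th.
Proof.
  unfold dflux_th, dflux_ph, sum3, e_th, e_ph, de_ph, sph; simpl.
  set (P := sph_pt x s th ph).
  generalize (sin2_cos2 th) (sin2_cos2 ph). unfold Rsqr. intros H1 H2.
  set (st := sin th) in *. set (ct := cos th) in *. set (sp := sin ph) in *. set (cp := cos ph) in *.
  nsatz.
Qed.

Hypotheses (HO : open Om) (Hin : forall th ph, Om (sph_pt x s th ph))
  (HV : forall i, C1_on Om (V i) (DV i)).

Lemma is_derive_flux_th th ph : is_derive (fun t => flux_th t ph) th (dflux_th th ph).
Proof.
  apply (is_derive_Rmult sin); [apply is_derive_sin|].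
  apply (is_derive_sum3 (fun i t => e_th i t ph * V i (sph_pt x s t ph))). intro i.
  apply (is_derive_Rmult (fun t => e_th i t ph)); [apply is_derive_e_th|].
  apply (is_derive_comp_C1_on Om (V i) (DV i) (fun t => sph_pt x s t ph)); auto.
  intro j. apply is_derive_sph_pt_th.
Qed.

Lemma is_derive_flux_ph th ph : is_derive (fun t => flux_ph th t) ph (dflux_ph th ph).
Proof.
  apply (is_derive_sum3 (fun i t => e_ph i t * V i (sph_pt x s th t))). intro i.
  apply (is_derive_Rmult (fun t => e_ph i t)); [apply is_derive_e_ph|].
  apply (is_derive_comp_C1_on Om (V i) (DV i) (fun t => sph_pt x s th t)); auto.
  intro j. apply is_derive_sph_pt_ph.
Qed.

Lemma continuous_on_sph_pt (f : R3 -> R) c th ph : (forall z, Om z -> continuous f z) ->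
  continuous (fun q : R3 => f (sph_pt x s (coord q I2) (coord q I3))) (mk3 c th ph).
Proof.
  intro Hf. apply (continuous_comp (fun q : R3 => sph_pt x s (coord q I2) (coord q I3)) f).
  - apply continuous_ray; [apply continuous_Rconst | apply continuous_sph; apply continuous_coord].
  - apply Hf, Hin.
Qed.

Ltac field_leaf := idtac; match goal with
  | |- continuous (fun q => V ?i _) _ =>
      apply (continuous_on_sph_pt (V i)); intros z hz; apply (proj2 (proj2 (HV i))), hz
  | |- continuous (fun q => DV ?i ?j _) _ =>
      apply (continuous_on_sph_pt (DV i j)); intros z hz; apply (proj1 (proj2 (HV i))), hz
  end.

Lemma continuous_dflux_th c th ph : continuous (fun q : R3 => dflux_th (coord q I2) (coord q I3)) (mk3 c th ph).
Proof. cbv beta iota delta [dflux_th sum3 e_th]. solve_continuous field_leaf. Qed.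
Lemma continuous_dflux_ph c th ph : continuous (fun q : R3 => dflux_ph (coord q I2) (coord q I3)) (mk3 c th ph).
Proof. cbv beta iota delta [dflux_ph sum3 e_ph de_ph]. solve_continuous field_leaf. Qed.
Lemma continuous_flux_th c th ph : continuous (fun q : R3 => flux_th (coord q I2) (coord q I3)) (mk3 c th ph).
Proof. cbv beta iota delta [flux_th sum3 e_th]. solve_continuous field_leaf. Qed.

Lemma RInt_dflux_ph th : RInt (fun ph => dflux_ph th ph) 0 (2 * PI) = 0.
Proof.
  transitivity (flux_ph th (2 * PI) - flux_ph th 0).
  - apply is_RInt_unique, (is_RInt_derive (V := R_CompleteNormedModule) (fun t => flux_ph th t)).
    + intros ph _. apply is_derive_flux_ph.
    + intros ph _. apply (continuous_fix12 (fun q => dflux_ph (coord q I2) (coord q I3)) 0 th ph).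
      apply continuous_dflux_ph.
  - change (flux_ph th (2 * PI) - flux_ph th 0 = 0).
    unfold flux_ph, sph_pt, sph, e_ph. rewrite cos_2PI, sin_2PI, cos_0, sin_0. ring.
Qed.

Lemma RInt_RInt_dflux_th : RInt (fun th => RInt (fun ph => dflux_th th ph) 0 (2 * PI)) 0 PI = 0.
Proof.
  pose proof PI_RGT_0.
  set (A := fun th => RInt (fun ph => flux_th th ph) 0 (2 * PI)).
  assert (DA : forall th, is_derive A th (RInt (fun ph => dflux_th th ph) 0 (2 * PI))).
  { intro th. unfold A.
    rewrite (RInt_ext (fun ph => dflux_th th ph) (fun ph => Derive (fun t => flux_th t ph) th))
      by (intros; symmetry; apply is_derive_unique, is_derive_flux_th).
    apply (is_derive_RInt_param (fun t ph => flux_th t ph)).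
    - apply filter_forall. intros t ph _. eexists. apply is_derive_flux_th.
    - intros ph _. apply continuity_2d_pt_ext with (fun u v => dflux_th u v).
      + intros. symmetry. apply is_derive_unique, is_derive_flux_th.
      + apply (continuity_2d_pt_fix1 (fun q => dflux_th (coord q I2) (coord q I3)) 0 th ph).
        apply continuous_dflux_th.
    - apply filter_forall. intros t. apply (ex_RInt_continuous (V := R_CompleteNormedModule)).
      intros ph _. apply (continuous_fix12 (fun q => flux_th (coord q I2) (coord q I3)) 0 t ph).
      apply continuous_flux_th. }
  transitivity (A PI - A 0).
  - apply is_RInt_unique, (is_RInt_derive (V := R_CompleteNormedModule) A).
    + intros th _. apply DA.
    + intros th _. apply (continuity_2d_pt_snd (fun (u : R) v => RInt (fun ph => dflux_th v ph) 0 (2 * PI)) 0 th).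
      apply (continuity_2d_pt_RInt (fun (u : R) v ph => dflux_th v ph) 0 (2 * PI) 0 th 1); [lra | lra|].
      intros. apply continuous_dflux_th.
  - change (A PI - A 0 = 0). unfold A, flux_th. rewrite sin_PI, sin_0.
    rewrite !(RInt_ext (fun ph => 0 * _) (fun _ => 0)) by (intros; apply Rmult_0_l).
    rewrite RInt_const. simpl. unfold scal; simpl; unfold mult; simpl. ring.
Qed.

End TangentialDivergence.

Lemma continuous_ray_comp (f : R3 -> R) (x : R3) (s : R) xi0 :
  continuous f (vadd x (vscale s xi0)) -> continuous (fun xi => f (vadd x (vscale s xi))) xi0.
Proof.
  intro H. apply (continuous_comp (fun xi => vadd x (vscale s xi)) f); auto.
  apply continuous_ray; [apply continuous_Rconst | apply continuous_id].
Qed.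

Lemma sph_avg_tangential_div Om x s V DV : open Om -> (forall th ph, Om (sph_pt x s th ph)) ->
  (forall i, C1_on Om (V i) (DV i)) ->
  s * sph_avg (fun xi => sum3 (fun i => DV i i (vadd x (vscale s xi))) -
     sum3 (fun i => sum3 (fun j => coord xi i * coord xi j * DV i j (vadd x (vscale s xi))))) =
  2 * sph_avg (fun xi => sum3 (fun i => coord xi i * V i (vadd x (vscale s xi)))).
Proof.
  intros HO Hin HV.
  set (g1 := fun xi => sum3 (fun i => DV i i (vadd x (vscale s xi))) -
     sum3 (fun i => sum3 (fun j => coord xi i * coord xi j * DV i j (vadd x (vscale s xi))))).
  set (g2 := fun xi => sum3 (fun i => coord xi i * V i (vadd x (vscale s xi)))).
  assert (C1 : continuous_on_S2 g1).
  { intros th ph. unfold g1, sum3. solve_continuous ltac:(idtac; match goal with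
      |- continuous (fun q => DV ?i _ _) _ => apply continuous_ray_comp, (proj1 (proj2 (HV i))), Hin end). }
  assert (C2 : continuous_on_S2 g2).
  { intros th ph. unfold g2, sum3. solve_continuous ltac:(idtac; match goal with
      |- continuous (fun q => V ?i _) _ => apply continuous_ray_comp, (proj2 (proj2 (HV i))), Hin end). }
  apply Rminus_diag_uniq.
  rewrite <- (sph_avg_scal s g1), <- (sph_avg_scal 2 g2), <- sph_avg_minus by
    (auto; apply continuous_on_S2_scal; auto).
  unfold sph_avg.
  rewrite (RInt_ext _ (fun th => RInt (fun ph => dflux_th x s V DV th ph) 0 (2 * PI))).
  { rewrite (RInt_RInt_dflux_th Om); auto. change (/ (4 * PI) * 0 = 0). ring. }
  intros th _.
  rewrite (RInt_ext _ (fun ph => dflux_th x s V DV th ph + dflux_ph x s V DV th ph)).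
  - rewrite (RInt_plus (V := R_CompleteNormedModule)).
    + simpl. unfold plus; simpl. rewrite (RInt_dflux_ph Om); auto. apply Rplus_0_r.
    + apply (ex_RInt_continuous (V := R_CompleteNormedModule)). intros ph _.
      apply (continuous_fix12 (fun q => dflux_th x s V DV (coord q I2) (coord q I3)) 0 th ph).
      apply (continuous_dflux_th Om); auto.
    + apply (ex_RInt_continuous (V := R_CompleteNormedModule)). intros ph _.
      apply (continuous_fix12 (fun q => dflux_ph x s V DV (coord q I2) (coord q I3)) 0 th ph).
      apply (continuous_dflux_ph Om); auto.
  - intros ph _. rewrite (dflux_sum x s V DV th ph). unfold g1, g2, sph_pt. simpl. ring.
Qed.

(** * Euclidean balls *)

Lemma nsq_expand (z : R3) :
  nsq z = coord z I1 * coord z I1 + coord z I2 * coord z I2 + coord z I3 * coord z I3.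
Proof. reflexivity. Qed.

Lemma nsq_ge0 z : 0 <= nsq z.
Proof. rewrite nsq_expand. nra. Qed.

Lemma edist_ge0 x z : 0 <= edist x z.
Proof. apply sqrt_pos. Qed.

Lemma edist_sym y z : edist y z = edist z y.
Proof. unfold edist, enorm. f_equal. rewrite !nsq_expand. unfold vsub, mk3; simpl. ring. Qed.

Lemma edist_ray (x xi : R3) a b : nsq xi = 1 ->
  edist (vadd x (vscale a xi)) (vadd x (vscale b xi)) = Rabs (a - b).
Proof.
  intro H. unfold edist, enorm. rewrite <- sqrt_Rsqr_abs. f_equal.
  rewrite nsq_expand in *. unfold vsub, vadd, vscale, mk3, Rsqr.
  transitivity ((a - b) * (a - b) *
    (coord xi I1 * coord xi I1 + coord xi I2 * coord xi I2 + coord xi I3 * coord xi I3)); [simpl; ring|].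
  rewrite H; ring.
Qed.

Lemma edist_center_ray (x xi : R3) b : nsq xi = 1 -> edist x (vadd x (vscale b xi)) = Rabs b.
Proof.
  intro H. rewrite <- (vadd_vscale0 x xi) at 1. rewrite edist_ray by exact H.
  rewrite Rminus_0_l. apply Rabs_Ropp.
Qed.

Lemma cauchy_schwarz3 a b : dot a b <= sqrt (nsq a) * sqrt (nsq b).
Proof.
  rewrite <- sqrt_mult by apply nsq_ge0.
  eapply Rle_trans; [apply RRle_abs|]. rewrite <- sqrt_Rsqr_abs. apply sqrt_le_1_alt.
  rewrite !nsq_expand. unfold Rsqr, dot, sum3.
  set (a1 := coord a I1). set (a2 := coord a I2). set (a3 := coord a I3).
  set (b1 := coord b I1). set (b2 := coord b I2). set (b3 := coord b I3).
  (* Lagrange's identity *)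
  assert (E : (a1*a1+a2*a2+a3*a3)*(b1*b1+b2*b2+b3*b3) - (a1*b1+a2*b2+a3*b3)*(a1*b1+a2*b2+a3*b3) =
    (a1*b2-a2*b1)*(a1*b2-a2*b1) + (a1*b3-a3*b1)*(a1*b3-a3*b1) + (a2*b3-a3*b2)*(a2*b3-a3*b2)) by ring.
  pose proof (Rle_0_sqr (a1*b2-a2*b1)). pose proof (Rle_0_sqr (a1*b3-a3*b1)).
  pose proof (Rle_0_sqr (a2*b3-a3*b2)). unfold Rsqr in *. lra.
Qed.

Lemma edist_triang x y z : edist x z <= edist x y + edist y z.
Proof.
  unfold edist, enorm. set (a := vsub x y). set (b := vsub y z).
  assert (E : nsq (vsub x z) = nsq a + 2 * dot a b + nsq b).
  { unfold a, b. rewrite !nsq_expand. unfold dot, sum3, vsub, mk3; simpl. ring. }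
  rewrite E, <- (sqrt_Rsqr (sqrt (nsq a) + sqrt (nsq b))) by (apply Rplus_le_le_0_compat; apply sqrt_pos).
  apply sqrt_le_1_alt. unfold Rsqr.
  pose proof (sqrt_sqrt _ (nsq_ge0 a)). pose proof (sqrt_sqrt _ (nsq_ge0 b)).
  pose proof (cauchy_schwarz3 a b). nra.
Qed.

Lemma coord_le_edist (y z : R3) i : Rabs (coord z i - coord y i) <= edist z y.
Proof.
  unfold edist, enorm. rewrite <- sqrt_Rsqr_abs. apply sqrt_le_1_alt.
  rewrite nsq_expand. unfold vsub, mk3, Rsqr; simpl.
  destruct z as [[a1 a2] a3]; destruct y as [[b1 b2] b3]; simpl.
  pose proof (Rle_0_sqr (a1 - b1)). pose proof (Rle_0_sqr (a2 - b2)). pose proof (Rle_0_sqr (a3 - b3)).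
  unfold Rsqr in *. destruct i; simpl; lra.
Qed.

Lemma near3_edist y t d : near3 y t d -> edist y t < 2 * d.
Proof.
  intro H. pose proof (H I1) as h1; pose proof (H I2) as h2; pose proof (H I3) as h3.
  assert (d0 : 0 < d) by (pose proof (Rabs_pos (coord t I1 - coord y I1)); lra).
  unfold edist, enorm. rewrite <- (sqrt_Rsqr (2 * d)) by lra.
  apply sqrt_lt_1_alt. split; [apply nsq_ge0|].
  rewrite nsq_expand. unfold vsub, mk3, Rsqr; simpl.
  apply Rabs_def2 in h1. apply Rabs_def2 in h2. apply Rabs_def2 in h3. simpl in *. nra.
Qed.

Lemma edist_eq0 (x z : R3) : edist x z = 0 -> z = x.
Proof.
  unfold edist, enorm. intro H. apply sqrt_eq_0 in H; [|apply nsq_ge0].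
  rewrite nsq_expand in H. unfold vsub, mk3 in H; simpl in H.
  destruct x as [[a1 a2] a3]; destruct z as [[b1 b2] b3]; simpl in *.
  pose proof (Rle_0_sqr (a1 - b1)). pose proof (Rle_0_sqr (a2 - b2)). pose proof (Rle_0_sqr (a3 - b3)).
  unfold Rsqr in *.
  assert (e1 : (a1 - b1) * (a1 - b1) = 0) by lra. assert (e2 : (a2 - b2) * (a2 - b2) = 0) by lra.
  assert (e3 : (a3 - b3) * (a3 - b3) = 0) by lra.
  apply Rsqr_0_uniq in e1, e2, e3. f_equal; [f_equal|]; lra.
Qed.

Lemma polar_decomposition (x z : R3) : 0 < edist x z ->
  exists xi, nsq xi = 1 /\ z = vadd x (vscale (edist x z) xi).
Proof.
  intro H. set (rho := edist x z) in *.
  assert (Hr : rho * rho = nsq (vsub z x)).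
  { unfold rho. rewrite edist_sym. apply sqrt_sqrt, nsq_ge0. }
  exists (vscale (/ rho) (vsub z x)). split.
  - rewrite nsq_expand in *. unfold vscale, vsub, mk3 in *; simpl in *.
    apply Rmult_eq_reg_l with (rho * rho); [|nra].
    rewrite Rmult_1_r. rewrite Hr at 2. field. lra.
  - destruct x as [[a1 a2] a3]; destruct z as [[b1 b2] b3]. unfold vadd, vscale, vsub, mk3; simpl.
    f_equal; [f_equal|]; field; lra.
Qed.

Section BallInDomain.
Variables (Om : R3 -> Prop) (x : R3) (r : R).
Hypotheses (Hrd : forall y, boundary Om y -> r < edist x y) (Hx : Om x).

(* If the ray left [Om] before time [r], the supremum of the times up to which it stays in
   [Om] would give a boundary point at distance at most [r] from [x]. *)
Lemma ray_in_domain xi : nsq xi = 1 -> forall t, 0 <= t <= r -> Om (vadd x (vscale t xi)).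
Proof.
  intros Hxi t1 [h0 h1]. set (L := fun t => vadd x (vscale t xi)).
  apply NNPP. intro Hn. fold (L t1) in Hn.
  set (E := fun t => 0 <= t /\ forall t', 0 <= t' <= t -> Om (L t')).
  assert (Eub : forall t, E t -> t < t1).
  { intros t [ht Ht]. destruct (Rlt_or_le t t1); auto. exfalso. apply Hn, Ht. lra. }
  assert (E0 : E 0).
  { split; [lra|]. intros t' ht'. replace t' with 0 by lra. unfold L. rewrite vadd_vscale0. auto. }
  destruct (completeness E (ex_intro _ t1 (fun t ht => Rlt_le _ _ (Eub t ht))) (ex_intro _ 0 E0))
    as [b [Hub Hlub]].
  assert (b0 : 0 <= b) by (apply Hub; auto).
  assert (bt1 : b <= t1) by (apply Hlub; intros t ht; apply Rlt_le, Eub, ht).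
  assert (K : forall t', 0 <= t' < b -> Om (L t')).
  { intros t' ht'. apply NNPP. intro hn.
    assert (b <= t'); [|lra].
    apply Hlub. intros t [ht Ht]. destruct (Rle_or_lt t t'); auto.
    exfalso. apply hn, Ht. lra. }
  assert (Bd : boundary Om (L b)).
  { split.
    - intros eps Heps. exists (L (Rmax 0 (b - eps / 2))). split.
      + destruct (Rlt_or_le 0 b).
        * apply K. split; [apply Rmax_l | apply Rmax_lub_lt; lra].
        * apply (proj2 E0). unfold Rmax. destruct Rle_dec; lra.
      + unfold L. rewrite edist_ray by exact Hxi. unfold Rmax.
        destruct Rle_dec; rewrite Rabs_left1; lra.
    - intros [eps [Heps Hi]].
      assert (E (b + eps / 2)).
      { split; [lra|]. intros t' ht'. destruct (Rlt_or_le t' b); [apply K; lra|].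
        apply Hi. unfold L. rewrite edist_ray by exact Hxi. apply Rabs_def1; lra. }
      assert (b + eps / 2 <= b) by (apply Hub; auto). lra. }
  pose proof (Hrd _ Bd) as H. unfold L in H.
  rewrite edist_center_ray, Rabs_right in H by (auto; lra). lra.
Qed.

Lemma closed_ball_in_domain z : edist x z <= r -> Om z.
Proof.
  intro Hz. destruct (Rle_lt_or_eq_dec 0 (edist x z) (edist_ge0 x z)) as [hp|he].
  - destruct (polar_decomposition x z hp) as [xi [Hxi E]]. rewrite E. apply ray_in_domain; auto. lra.
  - rewrite (edist_eq0 x z); auto.
Qed.

End BallInDomain.

Definition toR3 (t : Compactness.Tn 3 R) : R3 := mk3 (fst t) (fst (snd t)) (fst (snd (snd t))).
Definition toTn (y : R3) : Compactness.Tn 3 R := (coord y I1, (coord y I2, (coord y I3, tt))).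

Lemma margin_gauge Om x r y : open Om -> (forall z, edist x z <= r -> Om z) ->
  exists d : posreal, (Om y -> forall z, edist z y < 4 * d -> Om z) /\
                      (~ Om y -> 4 * d <= edist x y - r).
Proof.
  intros HO Hcb. destruct (classic (Om y)) as [h|h].
  - destruct (open_near3 Om _ HO h) as [e [He Hin]].
    assert (He4 : 0 < e / 4) by lra. exists (mkposreal _ He4). simpl. split; [|contradiction].
    intros _ z hz. apply Hin. intro i. eapply Rle_lt_trans; [apply coord_le_edist | lra].
  - assert (r < edist x y) by
      (destruct (Rle_or_lt (edist x y) r); auto; exfalso; apply h, Hcb; auto).
    assert (He4 : 0 < (edist x y - r) / 4) by lra.
    exists (mkposreal _ He4). simpl. split; [contradiction | intros _; lra].
Qed.

(* Cover the sphere of radius [r] by finitely many gauge balls: points of the sphere are then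
   uniformly far from the complement of [Om]. *)
Lemma open_ball_margin Om x r : open Om -> 0 < r -> (forall z, edist x z <= r -> Om z) ->
  exists R, r < R /\ forall z, edist x z < R -> Om z.
Proof.
  intros HO Hr Hcb.
  assert (D : forall t : Compactness.Tn 3 R, {d : posreal |
     (Om (toR3 t) -> forall z, edist z (toR3 t) < 4 * d -> Om z) /\
     (~ Om (toR3 t) -> 4 * d <= edist x (toR3 t) - r)})
    by (intro t; apply constructive_indefinite_description, margin_gauge; auto).
  set (delta := fun t => proj1_sig (D t)).
  set (a := (coord x I1 - (r + 1), (coord x I2 - (r + 1), (coord x I3 - (r + 1), tt))) : Compactness.Tn 3 R).
  set (b := (coord x I1 + (r + 1), (coord x I2 + (r + 1), (coord x I3 + (r + 1), tt))) : Compactness.Tn 3 R).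
  destruct (compactness_value 3 a b delta) as [d0 Hd0].
  set (d := Rmin d0 1).
  assert (Hd : 0 < d) by (apply Rmin_pos; [apply cond_pos | lra]).
  assert (Hdd : d <= d0) by apply Rmin_l.
  exists (r + d / 4). split; [lra|].
  intros z hz. destruct (Rle_or_lt (edist x z) r) as [hle|hlt]; [apply Hcb; auto|].
  destruct (polar_decomposition x z) as [xi [Hxi Ez]]; [lra|].
  set (y := vadd x (vscale r xi)).
  assert (Hxy : edist x y = r) by (unfold y; rewrite edist_center_ray, Rabs_right; auto; lra).
  assert (Hzy : edist z y < d / 4) by (rewrite Ez; unfold y; rewrite edist_ray, Rabs_right; auto; lra).
  assert (Hbox : bounded_n 3 a b (toTn y)).
  { assert (B : forall i, Rabs (coord y i - coord x i) <= r)
      by (intro i; eapply Rle_trans; [apply coord_le_edist | rewrite edist_sym; lra]).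
    pose proof (proj1 (Rabs_le_between' _ _ _) (B I1)). pose proof (proj1 (Rabs_le_between' _ _ _) (B I2)).
    pose proof (proj1 (Rabs_le_between' _ _ _) (B I3)).
    unfold a, b, toTn. simpl in *. repeat split; lra. }
  apply NNPP. intro hn. apply (Hd0 (toTn y) Hbox). intros [t [_ [Hcl Hdt]]].
  assert (Hn3 : near3 (toR3 t) y (delta t)).
  { destruct t as [t1 [t2 [t3 []]]]. simpl in Hcl. destruct Hcl as [c1 [c2 [c3 _]]].
    intros [| |]; simpl; auto. }
  pose proof (near3_edist _ _ _ Hn3) as Hyt. rewrite edist_sym in Hyt.
  destruct (proj2_sig (D t)) as [P1 P2]. fold (delta t) in P1, P2.
  pose proof (cond_pos (delta t)).
  destruct (classic (Om (toR3 t))) as [ht|ht].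
  - apply hn, (P1 ht). pose proof (edist_triang z y (toR3 t)). lra.
  - specialize (P2 ht). pose proof (edist_triang x y (toR3 t)). lra.
Qed.

(** * The flow *)

(* With [a i j = d_j u_i], [b i j k = d_k d_j u_i]: the Poisson equation for [p] and [div u = 0]
   make [grad p + (u.grad) u] divergence free. *)
Lemma div_convective_algebra (pp uu : idx -> R) (a : idx -> idx -> R) (b : idx -> idx -> idx -> R) :
  - sum3 pp = sum3 (fun i => sum3 (fun j => b i j i * uu j + a i j * a j i + (a i i * a j j + uu i * b j j i))) ->
  sum3 (fun i => a i i) = 0 ->
  (forall k, sum3 (fun j => b j j k) = 0) ->
  sum3 (fun i => pp i + sum3 (fun j => a j i * a i j + uu j * b i j i)) = 0.
Proof.
  intros HP Hd Hdd. pose proof (Hdd I1). pose proof (Hdd I2). pose proof (Hdd I3).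
  unfold sum3 in *.
  assert (E : a I3 I3 = - a I1 I1 - a I2 I2) by lra. rewrite E in HP |- *.
  assert (E1 : b I3 I3 I1 = - b I1 I1 I1 - b I2 I2 I1) by lra.
  assert (E2 : b I3 I3 I2 = - b I1 I1 I2 - b I2 I2 I2) by lra.
  assert (E3 : b I3 I3 I3 = - b I1 I1 I3 - b I2 I2 I3) by lra.
  rewrite E1, E2, E3 in HP. rewrite ?E1, ?E2, ?E3. lra.
Qed.

Section Flow.

Variables (Om : R3 -> Prop) (u : R3 -> R3) (p : R3 -> R).
Hypotheses (HO : open Om)
  (Hu : forall i, C2_on Om (fun y => coord (u y) i))
  (Hdiv : forall y, Om y -> sum3 (fun i => partial i (fun z => coord (u z) i) y) = 0)
  (Hp : C2_on Om p)
  (Hpoisson : forall y, Om y ->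
     - sum3 (fun i => partial i (partial i p) y)
     = sum3 (fun i => sum3 (fun j =>
         partial i (partial j (fun z => coord (u z) i * coord (u z) j)) y))).

Definition uc (i : idx) (y : R3) : R := coord (u y) i.

Lemma C1_on_uc i : C1_on Om (uc i) (fun j => partial j (uc i)).
Proof. exact (proj1 (C2_on_C1_on Om _ (Hu i))). Qed.
Lemma C1_on_duc i k : C1_on Om (partial k (uc i)) (fun j => partial j (partial k (uc i))).
Proof. exact (proj2 (C2_on_C1_on Om _ (Hu i)) k). Qed.
Lemma C1_on_p : C1_on Om p (fun j => partial j p).
Proof. exact (proj1 (C2_on_C1_on Om _ Hp)). Qed.
Lemma C1_on_dp k : C1_on Om (partial k p) (fun j => partial j (partial k p)).
Proof. exact (proj2 (C2_on_C1_on Om _ Hp) k). Qed.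

Definition Ufield i y := partial i p y + sum3 (fun j => uc j y * partial j (uc i) y).
Definition DUfield i k y := partial k (partial i p) y +
  sum3 (fun j => partial k (uc j) y * partial j (uc i) y + uc j y * partial k (partial j (uc i)) y).

Lemma C1_on_Ufield i : C1_on Om (Ufield i) (DUfield i).
Proof.
  exact (C1_on_plus Om _ _ _ _ (C1_on_dp i) (C1_on_sum3 Om (fun j y => uc j y * partial j (uc i) y) _
     (fun j => C1_on_mult Om _ _ _ _ (C1_on_uc j) (C1_on_duc i j)))).
Qed.

Lemma partial_partial_uc_uc y i j : Om y ->
  partial i (partial j (fun z => uc i z * uc j z)) y =
  partial i (partial j (uc i)) y * uc j y + partial j (uc i) y * partial i (uc j) y +
  (partial i (uc i) y * partial j (uc j) y + uc i y * partial i (partial j (uc j)) y).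
Proof.
  intro Hy.
  rewrite (partial_ext_on Om (partial j (fun z => uc i z * uc j z))
    (fun z => partial j (uc i) z * uc j z + uc i z * partial j (uc j) z) y i)
    by (auto; intros z hz; exact (partial_C1_on Om _ _ z j (C1_on_mult Om _ _ _ _ (C1_on_uc i) (C1_on_uc j)) hz)).
  exact (partial_C1_on Om _ _ y i (C1_on_plus Om _ _ _ _
    (C1_on_mult Om _ _ _ _ (C1_on_duc i j) (C1_on_uc j))
    (C1_on_mult Om _ _ _ _ (C1_on_uc i) (C1_on_duc j j))) Hy).
Qed.

Lemma div_Ufield y : Om y -> sum3 (fun i => DUfield i i y) = 0.
Proof.
  intro Hy. unfold DUfield.
  apply (div_convective_algebra (fun i => partial i (partial i p) y) (fun i => uc i y)
    (fun i j => partial j (uc i) y) (fun i j k => partial k (partial j (uc i)) y)).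
  - rewrite (Hpoisson y Hy). unfold sum3. rewrite !(partial_partial_uc_uc y) by exact Hy. reflexivity.
  - apply Hdiv, Hy.
  - intro k. apply (C1_on_deriv_eq0 Om (fun z => sum3 (fun j => partial j (uc j) z))
       (fun k z => sum3 (fun j => partial k (partial j (uc j)) z)) y k HO Hy).
    + apply (C1_on_sum3 Om (fun j => partial j (uc j))). intro j. apply C1_on_duc.
    + intros z hz. apply Hdiv, hz.
Qed.

Lemma continuous_uc i z : Om z -> continuous (uc i) z.
Proof. apply (proj2 (proj2 (C1_on_uc i))). Qed.
Lemma continuous_duc i j z : Om z -> continuous (partial j (uc i)) z.
Proof. intro h. apply (proj1 (proj2 (C1_on_uc i))), h. Qed.
Lemma continuous_dduc i j k z : Om z -> continuous (partial k (partial j (uc i))) z.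
Proof. intro h. apply (proj1 (proj2 (C1_on_duc i j))), h. Qed.
Lemma continuous_p z : Om z -> continuous p z.
Proof. apply (proj2 (proj2 C1_on_p)). Qed.
Lemma continuous_dp j z : Om z -> continuous (partial j p) z.
Proof. intro h. apply (proj1 (proj2 C1_on_p)), h. Qed.
Lemma continuous_Ufield i z : Om z -> continuous (Ufield i) z.
Proof. apply (proj2 (proj2 (C1_on_Ufield i))). Qed.
Lemma continuous_DUfield i j z : Om z -> continuous (DUfield i j) z.
Proof. intro h. apply (proj1 (proj2 (C1_on_Ufield i))), h. Qed.

Variables (x : R3) (r : R) (v : R3).
Hypotheses (Hx : Om x) (Hr : 0 < r) (Hrd : forall y, boundary Om y -> r < edist x y).

Lemma nsq_sph th ph : nsq (sph th ph) = 1.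
Proof.
  rewrite nsq_expand. unfold sph, mk3; simpl.
  pose proof (sin2_cos2 th). pose proof (sin2_cos2 ph). unfold Rsqr in *. nra.
Qed.

Lemma ball_beyond_r : exists R, r < R /\ forall z, edist x z < R -> Om z.
Proof. apply open_ball_margin; auto. apply closed_ball_in_domain; auto. Qed.

Lemma sph_ray_in R (HR : forall z, edist x z < R -> Om z) s th ph :
  Rabs s < R -> Om (vadd x (vscale s (sph th ph))).
Proof. intro h. apply HR. rewrite edist_center_ray; auto. apply nsq_sph. Qed.

Lemma continuous_in_sph_coords (f : R3 -> R) s th ph : (forall z, Om z -> continuous f z) ->
  Om (vadd x (vscale s (sph th ph))) ->
  continuous (fun q : R3 => f (vadd x (vscale (coord q I1) (sph (coord q I2) (coord q I3))))) (mk3 s th ph).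
Proof.
  intros Hf Hin.
  apply (continuous_comp (fun q : R3 => vadd x (vscale (coord q I1) (sph (coord q I2) (coord q I3)))) f).
  - apply continuous_ray; [apply continuous_coord | apply continuous_sph; apply continuous_coord].
  - apply Hf, Hin.
Qed.

Ltac continuous_on_Om := idtac; match goal with
  | |- continuous (uc _) _ => apply continuous_uc
  | |- continuous (partial _ (uc _)) _ => apply continuous_duc
  | |- continuous (partial _ (partial _ (uc _))) _ => apply continuous_dduc
  | |- continuous p _ => apply continuous_p
  | |- continuous (partial _ p) _ => apply continuous_dp
  | |- continuous (Ufield _) _ => apply continuous_Ufield
  | |- continuous (DUfield _ _) _ => apply continuous_DUfield
  end; assumption.

Ltac flow_leaf := idtac; first
  [ match goal with |- continuous (fun q => ?f (vadd _ (vscale _ (sph _ _)))) _ =>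
      apply (continuous_in_sph_coords f); [intros ?z ?hz; continuous_on_Om | assumption] end
  | match goal with |- continuous (fun q => ?f (vadd _ (vscale _ q))) _ =>
      apply (continuous_ray_comp f); continuous_on_Om end ].

Lemma is_derive_ray (xi : R3) s i : is_derive (fun t => coord (vadd x (vscale t xi)) i) s (coord xi i).
Proof. destruct i; simpl; auto_derive; auto; ring. Qed.

Definition flux_U s xi := sum3 (fun i => coord xi i * Ufield i (vadd x (vscale s xi))).
Definition dflux_U s xi :=
  sum3 (fun i => coord xi i * sum3 (fun j => DUfield i j (vadd x (vscale s xi)) * coord xi j)).

Section BallR.
Variable R : R.
Hypothesis HR : forall z, edist x z < R -> Om z.

Lemma continuous_on_S2_flux_U s : Rabs s < R -> continuous_on_S2 (flux_U s).
Proof.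
  intros hs th ph. pose proof (sph_ray_in R HR s th ph hs).
  unfold flux_U, sum3. solve_continuous flow_leaf.
Qed.

Lemma continuous_on_S2_dflux_U s : Rabs s < R -> continuous_on_S2 (dflux_U s).
Proof.
  intros hs th ph. pose proof (sph_ray_in R HR s th ph hs).
  unfold dflux_U, sum3. solve_continuous flow_leaf.
Qed.

Lemma is_derive_flux_U s xi : Om (vadd x (vscale s xi)) ->
  is_derive (fun t => flux_U t xi) s (dflux_U s xi).
Proof.
  intro Hin. apply (is_derive_sum3 (fun i t => coord xi i * Ufield i (vadd x (vscale t xi)))).
  intro i. apply is_derive_scal.
  apply (is_derive_comp_C1_on Om (Ufield i) (DUfield i) (fun t => vadd x (vscale t xi))); auto.
  - apply C1_on_Ufield.
  - intro j. apply is_derive_ray.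
Qed.

(* By the tangential divergence theorem, [d/ds (s^2 flux_U s)] is [s^2] times the mean of
   [div Ufield = 0]. *)
Lemma sph_avg_d_scaled_flux_U s : Rabs s < R ->
  sph_avg (fun xi => 2 * s * flux_U s xi + s * s * dflux_U s xi) = 0.
Proof.
  intro hs.
  pose proof (continuous_on_S2_flux_U s hs) as C1. pose proof (continuous_on_S2_dflux_U s hs) as C2.
  rewrite sph_avg_plus, (sph_avg_scal (2 * s)), (sph_avg_scal (s * s)) by
    (auto; apply continuous_on_S2_scal; auto).
  pose proof (sph_avg_tangential_div Om x s Ufield DUfield HO
    (fun th ph => sph_ray_in R HR s th ph hs) C1_on_Ufield) as SL.
  rewrite (sph_avg_ext _ (fun xi => (-1) * dflux_U s xi)) in SL.
  2:{ intros th ph. rewrite div_Ufield by apply (sph_ray_in R HR s th ph hs). unfold dflux_U, sum3. ring. }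
  rewrite sph_avg_scal in SL by exact C2. fold (flux_U s) in SL.
  replace (2 * s * sph_avg (flux_U s)) with (s * (2 * sph_avg (flux_U s))) by ring.
  rewrite <- SL. ring.
Qed.

Lemma is_derive_scaled_flux_U s : Rabs s < R ->
  is_derive (fun t => sph_avg (fun xi => t * t * flux_U t xi)) s 0.
Proof.
  intro hs. rewrite <- (sph_avg_d_scaled_flux_U s hs).
  assert (Hnear : forall t, Rabs (t - s) < R - Rabs s -> Rabs t < R).
  { intros t ht. replace t with ((t - s) + s) by ring.
    eapply Rle_lt_trans; [apply Rabs_triang | lra]. }
  apply (is_derive_sph_avg (fun t xi => t * t * flux_U t xi)
    (fun t xi => 2 * t * flux_U t xi + t * t * dflux_U t xi) s (R - Rabs s)); [lra | | |];
    intros t th ph ht;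
    pose proof (sph_ray_in R HR t th ph (Hnear t ht)).
  - apply (is_derive_Rmult (fun t => t * t)); [auto_derive; auto; ring|].
    apply is_derive_flux_U; assumption.
  - unfold in_sph_coords, flux_U, sum3. solve_continuous flow_leaf.
  - unfold in_sph_coords, flux_U, dflux_U, sum3. solve_continuous flow_leaf.
Qed.

End BallR.

(* [s^2] times the mean flux is constant in [s] and vanishes at [s = 0]. *)
Lemma sph_avg_flux_U_eq0 : sph_avg (flux_U r) = 0.
Proof.
  destruct ball_beyond_r as [R [hR HR]].
  destruct (MVT_gen (fun t => sph_avg (fun xi => t * t * flux_U t xi)) 0 r (fun _ => 0)) as [c [_ E]].
  - intros t ht. rewrite Rmin_left, Rmax_right in ht by lra.
    apply (is_derive_scaled_flux_U R HR). rewrite Rabs_right; lra.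
  - intros t ht. rewrite Rmin_left, Rmax_right in ht by lra.
    apply continuity_pt_filterlim, (ex_derive_continuous (fun t => sph_avg (fun xi => t * t * flux_U t xi))).
    eexists. apply (is_derive_scaled_flux_U R HR). rewrite Rabs_right; lra.
  - rewrite !(sph_avg_scal (_ * _)) in E by (apply (continuous_on_S2_flux_U R HR); rewrite ?Rabs_R0, ?Rabs_right; lra).
    assert (E' : r * r * sph_avg (flux_U r) = 0) by lra.
    apply Rmult_integral in E'. destruct E' as [E'|E']; [nra | exact E'].
Qed.

Definition normal_w s xi := sum3 (fun i => coord xi i * (uc i (vadd x (vscale s xi)) - coord v i)).
Definition dnormal_w s xi :=
  sum3 (fun i => coord xi i * sum3 (fun j => partial j (uc i) (vadd x (vscale s xi)) * coord xi j)).
Definition normal_dp s xi := sum3 (fun i => partial i p (vadd x (vscale s xi)) * coord xi i).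
Definition normal_conv s xi :=
  sum3 (fun i => coord xi i * sum3 (fun j => uc j (vadd x (vscale s xi)) * partial j (uc i) (vadd x (vscale s xi)))).
Definition nsq_w s xi :=
  sum3 (fun i => (uc i (vadd x (vscale s xi)) - coord v i) * (uc i (vadd x (vscale s xi)) - coord v i)).

Lemma normal_w_dot s xi : normal_w s xi = dot xi (vsub (u (vadd x (vscale s xi))) v).
Proof. reflexivity. Qed.

Lemma nsq_w_nsq s xi : nsq_w s xi = nsq (vsub (u (vadd x (vscale s xi))) v).
Proof. reflexivity. Qed.

Lemma is_derive_normal_w s xi : Om (vadd x (vscale s xi)) ->
  is_derive (fun t => normal_w t xi) s (dnormal_w s xi).
Proof.
  intro Hin. apply (is_derive_sum3 (fun i t => coord xi i * (uc i (vadd x (vscale t xi)) - coord v i))).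
  intro i. apply is_derive_scal. rewrite <- (Rminus_0_r (sum3 _)).
  apply (is_derive_minus (fun t => uc i (vadd x (vscale t xi))) (fun _ => coord v i));
    [|apply is_derive_Rconst].
  apply (is_derive_comp_C1_on Om (uc i) (fun j => partial j (uc i)) (fun t => vadd x (vscale t xi)));
    auto using C1_on_uc, is_derive_ray.
Qed.

Lemma is_derive_mean_p_normal_w2 R : r < R -> (forall z, edist x z < R -> Om z) ->
  is_derive (fun s => sph_avg (fun xi => p (vadd x (vscale s xi))) +
                      sph_avg (fun xi => normal_w s xi * normal_w s xi)) r
    (sph_avg (normal_dp r) + sph_avg (fun xi => 2 * normal_w r xi * dnormal_w r xi)).
Proof.
  intros hR HR.
  assert (Hs : forall s th ph, Rabs (s - r) < R - r -> Om (vadd x (vscale s (sph th ph)))).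
  { intros s th ph hs. apply (sph_ray_in R HR). apply Rabs_def2 in hs. apply Rabs_def1; lra. }
  apply is_derive_Rplus.
  - apply (is_derive_sph_avg (fun s xi => p (vadd x (vscale s xi))) normal_dp r (R - r)); [lra | | |];
      intros s th ph hs; pose proof (Hs s th ph hs).
    + apply (is_derive_comp_C1_on Om p (fun j => partial j p) (fun t => vadd x (vscale t (sph th ph))));
        auto using C1_on_p, is_derive_ray.
    + unfold in_sph_coords. solve_continuous flow_leaf.
    + unfold in_sph_coords, normal_dp, sum3. solve_continuous flow_leaf.
  - apply (is_derive_sph_avg (fun s xi => normal_w s xi * normal_w s xi)
      (fun s xi => 2 * normal_w s xi * dnormal_w s xi) r (R - r)); [lra | | |];
      intros s th ph hs; pose proof (Hs s th ph hs).
    + replace (2 * normal_w s (sph th ph) * dnormal_w s (sph th ph)) with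
        (dnormal_w s (sph th ph) * normal_w s (sph th ph) + normal_w s (sph th ph) * dnormal_w s (sph th ph))
        by ring.
      apply (is_derive_Rmult (fun t => normal_w t (sph th ph))); apply is_derive_normal_w; assumption.
    + unfold in_sph_coords, normal_w, sum3. solve_continuous flow_leaf.
    + unfold in_sph_coords, normal_w, dnormal_w, sum3. solve_continuous flow_leaf.
Qed.

Lemma sph_avg_normal_dp_conv : sph_avg (normal_dp r) + sph_avg (normal_conv r) = 0.
Proof.
  destruct ball_beyond_r as [R [hR HR]].
  assert (hr : Rabs r < R) by (rewrite Rabs_right; lra).
  rewrite <- sph_avg_plus, <- sph_avg_flux_U_eq0.
  - apply sph_avg_ext. intros. unfold normal_dp, normal_conv, flux_U, Ufield, sum3. ring.
  - intros th ph. pose proof (sph_ray_in R HR r th ph hr).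
    unfold normal_dp, sum3. solve_continuous flow_leaf.
  - intros th ph. pose proof (sph_ray_in R HR r th ph hr).
    unfold normal_conv, sum3. solve_continuous flow_leaf.
Qed.

Definition zc k y := coord y k - coord x k.
Definition wc k y := uc k y - coord v k.
Definition Wfield i y :=
  sum3 (fun k => zc k y * wc k y) * wc i y + sum3 (fun k => zc k y * uc k y) * coord v i
  - sum3 (fun k => coord v k * zc k y) * uc i y.
Definition DWfield i j y :=
  sum3 (fun k => kron j k * wc k y + zc k y * partial j (uc k) y) * wc i y
  + sum3 (fun k => zc k y * wc k y) * partial j (uc i) y
  + sum3 (fun k => kron j k * uc k y + zc k y * partial j (uc k) y) * coord v i
  - (sum3 (fun k => coord v k * kron j k) * uc i y + sum3 (fun k => coord v k * zc k y) * partial j (uc i) y).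

Lemma C1_on_Wfield i : C1_on Om (Wfield i) (DWfield i).
Proof.
  assert (Czc : forall k, C1_on Om (zc k) (fun j _ => kron j k - 0))
    by (intro k; exact (C1_on_minus Om _ _ _ _ (C1_on_coord Om k) (C1_on_const Om (coord x k)))).
  assert (Cwc : forall k, C1_on Om (wc k) (fun j y => partial j (uc k) y - 0))
    by (intro k; exact (C1_on_minus Om _ _ _ _ (C1_on_uc k) (C1_on_const Om (coord v k)))).
  assert (Czw := C1_on_sum3 Om (fun k y => zc k y * wc k y) _ (fun k => C1_on_mult Om _ _ _ _ (Czc k) (Cwc k))).
  assert (Czu := C1_on_sum3 Om (fun k y => zc k y * uc k y) _ (fun k => C1_on_mult Om _ _ _ _ (Czc k) (C1_on_uc k))).
  assert (Czv := C1_on_sum3 Om (fun k y => coord v k * zc k y) _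
    (fun k => C1_on_mult Om _ _ _ _ (C1_on_const Om (coord v k)) (Czc k))).
  apply C1_on_ext with (1 := C1_on_minus Om _ _ _ _
    (C1_on_plus Om _ _ _ _ (C1_on_mult Om _ _ _ _ Czw (Cwc i)) (C1_on_mult Om _ _ _ _ Czu (C1_on_const Om (coord v i))))
    (C1_on_mult Om _ _ _ _ Czv (C1_on_uc i))).
  intros j y. unfold DWfield, sum3. ring.
Qed.

Lemma coord_ray_sub (xi : R3) e i : coord (vadd x (vscale e xi)) i - coord x i = e * coord xi i.
Proof. destruct i; simpl; ring. Qed.

Lemma normal_Wfield xi :
  sum3 (fun i => coord xi i * Wfield i (vadd x (vscale r xi))) = r * (normal_w r xi * normal_w r xi).
Proof. unfold Wfield, zc, wc, normal_w, sum3. rewrite !coord_ray_sub. ring. Qed.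

Lemma tangential_div_Wfield xi : Om (vadd x (vscale r xi)) ->
  sum3 (fun i => DWfield i i (vadd x (vscale r xi))) -
  sum3 (fun i => sum3 (fun j => coord xi i * coord xi j * DWfield i j (vadd x (vscale r xi)))) =
  nsq_w r xi + r * normal_conv r xi - normal_w r xi * normal_w r xi - 2 * r * (normal_w r xi * dnormal_w r xi).
Proof.
  intro hP.
  assert (D3 : partial I3 (uc I3) (vadd x (vscale r xi)) =
    - partial I1 (uc I1) (vadd x (vscale r xi)) - partial I2 (uc I2) (vadd x (vscale r xi)))
    by (pose proof (Hdiv _ hP) as D; unfold sum3 in D; unfold uc; lra).
  unfold DWfield, zc, wc, nsq_w, normal_conv, normal_w, dnormal_w, sum3. cbv beta iota delta [kron].
  rewrite !coord_ray_sub.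
  rewrite D3. ring.
Qed.

Lemma sph_r_in th ph : Om (vadd x (vscale r (sph th ph))).
Proof.
  destruct ball_beyond_r as [R [hR HR]]. apply (sph_ray_in R HR). rewrite Rabs_right; lra.
Qed.

Ltac continuous_on_S2_at_r :=
  intros ?th ?ph; pose proof (sph_r_in th ph);
  unfold normal_w, dnormal_w, normal_dp, normal_conv, nsq_w, sum3; solve_continuous flow_leaf.

Lemma sph_avg_Wfield_identity :
  sph_avg (nsq_w r) + r * sph_avg (normal_conv r) - sph_avg (fun xi => normal_w r xi * normal_w r xi)
  - 2 * r * sph_avg (fun xi => normal_w r xi * dnormal_w r xi)
  = 2 * sph_avg (fun xi => normal_w r xi * normal_w r xi).
Proof.
  assert (Cw : continuous_on_S2 (nsq_w r)) by continuous_on_S2_at_r.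
  assert (Cc : continuous_on_S2 (normal_conv r)) by continuous_on_S2_at_r.
  assert (Cn : continuous_on_S2 (fun xi => normal_w r xi * normal_w r xi)) by continuous_on_S2_at_r.
  assert (Cd : continuous_on_S2 (fun xi => normal_w r xi * dnormal_w r xi)) by continuous_on_S2_at_r.
  apply Rmult_eq_reg_l with r; [|lra].
  pose proof (sph_avg_tangential_div Om x r Wfield DWfield HO sph_r_in C1_on_Wfield) as SL.
  rewrite (sph_avg_ext _ (fun xi => nsq_w r xi + r * normal_conv r xi - normal_w r xi * normal_w r xi
    - 2 * r * (normal_w r xi * dnormal_w r xi))) in SL by (intros; apply tangential_div_Wfield, sph_r_in).
  rewrite (sph_avg_ext (fun xi => sum3 (fun i => coord xi i * Wfield i (vadd x (vscale r xi))))
    (fun xi => r * (normal_w r xi * normal_w r xi))) in SL by (intros; apply normal_Wfield).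
  rewrite !sph_avg_minus, sph_avg_plus, !sph_avg_scal in SL; auto using continuous_on_S2_scal,
    continuous_on_S2_plus, continuous_on_S2_minus.
  rewrite <- Rmult_assoc in SL. lra.
Qed.

Lemma is_derive_mean_p_normal_w2_value :
  is_derive (fun s => sph_avg (fun xi => p (vadd x (vscale s xi))) +
                      sph_avg (fun xi => normal_w s xi * normal_w s xi)) r
    (- (1 / r) * sph_avg (fun xi => 3 * (normal_w r xi * normal_w r xi) - nsq_w r xi)).
Proof.
  destruct ball_beyond_r as [R [hR HR]].
  assert (Cw : continuous_on_S2 (nsq_w r)) by continuous_on_S2_at_r.
  assert (Cn : continuous_on_S2 (fun xi => normal_w r xi * normal_w r xi)) by continuous_on_S2_at_r.
  assert (Cd : continuous_on_S2 (fun xi => normal_w r xi * dnormal_w r xi)) by continuous_on_S2_at_r.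
  replace (- (1 / r) * _) with
    (sph_avg (normal_dp r) + sph_avg (fun xi => 2 * normal_w r xi * dnormal_w r xi)).
  { apply (is_derive_mean_p_normal_w2 R hR HR). }
  rewrite (sph_avg_ext (fun xi => 2 * _ * _) (fun xi => 2 * (normal_w r xi * dnormal_w r xi)))
    by (intros; ring).
  rewrite sph_avg_minus, !sph_avg_scal; auto using continuous_on_S2_scal.
  pose proof sph_avg_Wfield_identity.
  replace (sph_avg (normal_dp r)) with (- sph_avg (normal_conv r)) by (pose proof sph_avg_normal_dp_conv; lra).
  apply Rmult_eq_reg_l with r; [|lra].
  replace (r * (- (1 / r) * _)) with (- (3 * sph_avg (fun xi => normal_w r xi * normal_w r xi) - sph_avg (nsq_w r)))
    by (field; lra).
  lra.
Qed.

End Flow.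

Theorem lemma1
  (Om : R3 -> Prop) (x : R3) (r : R)
  (u : R3 -> R3) (v : R3) (p : R3 -> R)
  (HOm : open Om)
  (Hx : Om x)
  (Hr : 0 < r)
  (Hrd : forall y, boundary Om y -> r < edist x y)
  (Hu : forall i, C2_on Om (fun y => coord (u y) i))
  (Hdiv : forall y, Om y -> sum3 (fun i => partial i (fun z => coord (u z) i) y) = 0)
  (Hp : C2_on Om p)
  (Hpoisson : forall y, Om y ->
     - sum3 (fun i => partial i (partial i p) y)
     = sum3 (fun i => sum3 (fun j =>
         partial i (partial j (fun z => coord (u z) i * coord (u z) j)) y))) :
  is_derive
    (fun s => sbar p x s
              + sph_avg (fun xi => (dot xi (vsub (u (vadd x (vscale s xi))) v)) ^ 2))
    r
    (- (1 / r) *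
       sph_avg (fun xi =>
         3 * (dot xi (vsub (u (vadd x (vscale r xi))) v)) ^ 2
         - nsq (vsub (u (vadd x (vscale r xi))) v))).
Proof.
  pose proof (is_derive_mean_p_normal_w2_value Om u p HOm Hu Hdiv Hp Hpoisson x r v Hx Hr Hrd) as H.
  rewrite (sph_avg_ext _ (fun xi => 3 * (normal_w u x v r xi * normal_w u x v r xi) - nsq_w u x v r xi))
    by (intros; rewrite normal_w_dot, nsq_w_nsq; ring).
  eapply is_derive_ext; [|exact H]. intro s. unfold sbar. f_equal.
  apply sph_avg_ext. intros. rewrite normal_w_dot. ring.
Qed.
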